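(* For every elementary wqo $E$ given by an expression in normal form, $\mathbf{h}(\mathcal{P}_f(E))=\underline{\mathbf{o}}(E)$.
   Context: A wqo is a quasi-order in which every infinite sequence has $i<j$ with $x_i\le x_j$. $\mathbf{o}(A),\mathbf{h}(A),\mathbf{w}(A)$ are the ranks of the roots of the well-founded trees of finite bad sequences, finite strictly decreasing sequences, and finite sequences of pairwise incomparable elements of $A$ (root: empty sequence, children: one-element extensions; rank $r(s)=\sup\{r(t)+1: t\text{ child of } s\}$). Multiplicatively indecomposable ordinals $\ge\omega$ are those of the form $\omega^{\omega^\gamma}$; an ordinal $\alpha$ is viewed as the wqo $(\alpha,\le)$. Constructions: $E_1\sqcup E_2$ disjoint union ordered by $\le_{E_1}\cup\le_{E_2}$; $E_1\times E_2$ Cartesian product with componentwise order; $E^{<\omega}$ finite words with subword embedding; $\mathsf{M}^\diamond(E)$ finite multisets with multiset embedding, and $\mathsf{M}^\diamond_n(E)$ its restriction to multisets of exactly $n$ elements; $\mathcal{P}_f(E)$ finite subsets with Hoare embedding ($S\le_H S'$ iff $\forall a\in S\,\exists b\in S'\,a\le b$); $E^{\times n}$ the $n$-fold Cartesian power. Elementary wqos are given by expressions of the grammar $E::=\alpha\ (\alpha\ge\omega^\omega\text{ multiplicatively indecomposable})\mid E_1\sqcup E_2\mid E_1\times E_2\mid E^{<\omega}\mid\mathsf{M}^\diamond(E)\mid\mathcal{P}_f(E)$; such an expression is in normal form if no subexpression can be rewritten by the rules $\mathcal{P}_f(\alpha)\to\alpha$; $E\times(E_1\sqcup E_2)\to(E\times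 E_1)\sqcup(E\times E_2)$; $(E_1\sqcup E_2)\times E\to(E_1\times E)\sqcup(E_2\times E)$; $\mathsf{M}^\diamond(E_1\sqcup E_2)\to\mathsf{M}^\diamond(E_1)\times\mathsf{M}^\diamond(E_2)$; $\mathcal{P}_f(E_1\sqcup E_2)\to\mathcal{P}_f(E_1)\times\mathcal{P}_f(E_2)$. Two wqos are wpo-isomorphic ($\cong_{wpo}$) if their quotients by $x\equiv y\iff x\le y\le x$ are isomorphic. Approximation $E'<_{\mathrm{approx}}E$ (by recursion on the expression $E$): if $E=\alpha$, $E'\cong_{wpo}\alpha'$ for some $\alpha'<\alpha$; if $E=E_1\sqcup E_2$ (resp. $E_1\times E_2$), $E'\cong_{wpo}E_1'\sqcup E_2'$ (resp. $E_1'\times E_2'$) with $E_i'<_{\mathrm{approx}}E_i$; if $E=E_1^{<\omega}$, $E'\cong_{wpo}(E_1')^{\times n}$ with $E_1'<_{\mathrm{approx}}E_1$, $n<\omega$; if $E=\mathsf{M}^\diamond(E_1)$, $E'\cong_{wpo}\mathsf{M}^\diamond_n(E_1')$ with $E_1'<_{\mathrm{approx}}E_1$, $n<\omega$; if $E=\mathcal{P}_f(E_1)$, $E'\cong_{wpo}\mathcal{P}_f(E_1')$ with $E_1'<_{\mathrm{approx}}E_1$. For $\mathbf{f}\in\{\mathbf{o},\mathbf{h},\mathbf{w}\}$, the weakened invariant is $\underline{\mathbf{f}}(E)=\sup\{\mathbf{f}(E')+1: E'<_{\mathrm{approx}}E\}$. *)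

From Stdlib Require Import List.
Import ListNotations.



Record qo := QO { car :> Type; qle : car -> car -> Prop }.
Arguments qle {q}.
Arguments QO : clear implicits.

Definition qlt {A : qo} (x y : A) : Prop := qle x y /\ ~ qle y x.
Definition qequiv {A : qo} (x y : A) : Prop := qle x y /\ qle y x.

(* wpo-isomorphism: the quotients by x == y <-> x<=y<=x are isomorphic.
   Written as a map f : A -> B that preserves and reflects the order
   (hence induces an injective order-embedding of quotients) and is
   surjective up to equivalence (so the induced map is onto). *)
Definition wpo_iso (A B : qo) : Prop :=
  exists f : A -> B,
    (forall x y : A, qle x y <-> qle (f x) (f y)) /\
    (forall b : B, exists a : A, qequiv (f a) b).

(* Ordinals, represented as well-ordered types (alpha, <=).           *)
Record word := WO {
  wcar :> Type;
  wle : wcar -> wcar -> Prop;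
  wle_refl : forall x, wle x x;
  wle_trans : forall x y z, wle x y -> wle y z -> wle x z;
  wle_antisym : forall x y, wle x y -> wle y x -> x = y;
  wle_total : forall x y, wle x y \/ wle y x;
  wlt_wf : well_founded (fun x y => wle x y /\ ~ wle y x)
}.

Definition wlt (W : word) (x y : W) : Prop := @wle W x y /\ ~ @wle W y x.

Definition wordQO (W : word) : qo := QO (wcar W) (@wle W).

(* initial segment below w : its order type is an arbitrary ordinal < alpha *)
Definition seg (W : word) (w : W) : Type := { x : W | wlt W x w }.
Definition segQO (W : word) (w : W) : qo :=
  QO (seg W w) (fun x y => @wle W (proj1_sig x) (proj1_sig y)).

Definition strict_incr {A B : Type} (ltA : A -> A -> Prop) (ltB : B -> B -> Prop)
  (f : A -> B) : Prop := forall x y, ltA x y -> ltB (f x) (f y).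

(* ordinal product beta * delta of the segments below w1 (beta) and w2
   (delta): delta copies of beta, i.e. pairs (d,b) ordered
   lexicographically with d major. *)
Definition lexlt_prod (W : word) (w1 w2 : W)
  (p q : seg W w2 * seg W w1) : Prop :=
  wlt W (proj1_sig (fst p)) (proj1_sig (fst q)) \/
  (proj1_sig (fst p) = proj1_sig (fst q) /\
   wlt W (proj1_sig (snd p)) (proj1_sig (snd q))).

(* alpha is multiplicatively indecomposable:
   for all beta, delta < alpha, beta * delta < alpha
   (beta*delta < alpha <-> it embeds strictly increasingly in a proper
   initial segment of alpha). *)
Definition mult_indec (W : word) : Prop :=
  forall w1 w2 : W, exists w : W, exists f : seg W w2 * seg W w1 -> seg W w,
    strict_incr (lexlt_prod W w1 w2)
      (fun x y => wlt W (proj1_sig x) (proj1_sig y)) f.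

(* The ordinal omega^omega: Cantor normal forms omega^a1 + ... + omega^ak
   with a1 >= ... >= ak, i.e. nonincreasing lists of naturals, ordered
   lexicographically. *)
Fixpoint noninc (l : list nat) : Prop :=
  match l with
  | [] => True
  | x :: l' => (forall y, In y l' -> y <= x) /\ noninc l'
  end.

Fixpoint lexlt (l m : list nat) : Prop :=
  match l, m with
  | [], _ :: _ => True
  | x :: l', y :: m' => x < y \/ (x = y /\ lexlt l' m')
  | _, _ => False
  end.

Definition omega_omega : Type := { l : list nat | noninc l }.

Definition ge_omega_omega (W : word) : Prop :=
  exists f : omega_omega -> W,
    strict_incr (fun x y : omega_omega => lexlt (proj1_sig x) (proj1_sig y))
      (wlt W) f.

Definition sum_le (A B : qo) (x y : A + B) : Prop :=
  match x, y with
  | inl a, inl a' => qle a a'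
  | inr b, inr b' => qle b b'
  | _, _ => False
  end.
Definition sumQO (A B : qo) : qo := QO (A + B)%type (@sum_le A B).

Definition prodQO (A B : qo) : qo :=
  QO (A * B)%type (fun x y => qle (fst x) (fst y) /\ qle (snd x) (snd y)).

Inductive subword (A : qo) : list A -> list A -> Prop :=
| sw_nil : forall v, subword A [] v
| sw_cons : forall x y u v, qle x y -> subword A u v -> subword A (x :: u) (y :: v)
| sw_skip : forall u y v, subword A u v -> subword A u (y :: v).
Definition starQO (A : qo) : qo := QO (list A) (subword A).

(* Finite
   multisets are represented by lists (the order is permutation
   invariant, so the quotient is the one of finite multisets). *)
Inductive mset_emb (A : qo) : list A -> list A -> Prop :=
| me_nil : forall v, mset_emb A [] v
| me_cons : forall x u v1 y v2,
    qle x y -> mset_emb A u (v1 ++ v2) -> mset_emb A (x :: u) (v1 ++ y :: v2).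
Definition msetQO (A : qo) : qo := QO (list A) (mset_emb A).

Definition msetnQO (A : qo) (n : nat) : qo :=
  QO { l : list A | length l = n }
     (fun x y => mset_emb A (proj1_sig x) (proj1_sig y)).

Definition powQO (A : qo) (n : nat) : qo :=
  QO { l : list A | length l = n }
     (fun x y => Forall2 (@qle A) (proj1_sig x) (proj1_sig y)).

(* P_f(E): finite subsets with Hoare embedding (finite subsets
   represented by lists; the Hoare preorder ignores order/duplicates) *)
Definition pfQO (A : qo) : qo :=
  QO (list A) (fun S S' => forall a, In a S -> exists b, In b S' /\ qle a b).

Inductive expr : Type :=
| EOrd (W : word) (_ : mult_indec W) (_ : ge_omega_omega W)
| ESum (e1 e2 : expr)
| EProd (e1 e2 : expr)
| EStar (e : expr)
| EMset (e : expr)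
| EPf (e : expr).

Fixpoint interp (e : expr) : qo :=
  match e with
  | EOrd W _ _ => wordQO W
  | ESum e1 e2 => sumQO (interp e1) (interp e2)
  | EProd e1 e2 => prodQO (interp e1) (interp e2)
  | EStar e1 => starQO (interp e1)
  | EMset e1 => msetQO (interp e1)
  | EPf e1 => pfQO (interp e1)
  end.

Definition is_sum (e : expr) : Prop :=
  match e with ESum _ _ => True | _ => False end.
Definition is_ord (e : expr) : Prop :=
  match e with EOrd _ _ _ => True | _ => False end.

Fixpoint normal_form (e : expr) : Prop :=
  match e with
  | EOrd _ _ _ => True
  | ESum e1 e2 => normal_form e1 /\ normal_form e2
  | EProd e1 e2 => ~ is_sum e1 /\ ~ is_sum e2 /\ normal_form e1 /\ normal_form e2
  | EStar e1 => normal_form e1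
  | EMset e1 => ~ is_sum e1 /\ normal_form e1
  | EPf e1 => ~ is_ord e1 /\ ~ is_sum e1 /\ normal_form e1
  end.

Fixpoint approx (e : expr) (E' : qo) : Prop :=
  match e with
  | EOrd W _ _ => exists w : W, wpo_iso E' (segQO W w)
  | ESum e1 e2 => exists A B, approx e1 A /\ approx e2 B /\ wpo_iso E' (sumQO A B)
  | EProd e1 e2 => exists A B, approx e1 A /\ approx e2 B /\ wpo_iso E' (prodQO A B)
  | EStar e1 => exists A n, approx e1 A /\ wpo_iso E' (powQO A n)
  | EMset e1 => exists A n, approx e1 A /\ wpo_iso E' (msetnQO A n)
  | EPf e1 => exists A, approx e1 A /\ wpo_iso E' (pfQO A)
  end.

Fixpoint bad {A : qo} (s : list A) : Prop :=
  match s with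
  | [] => True
  | x :: s' => (forall y, In y s' -> ~ qle x y) /\ bad s'
  end.

Fixpoint sdecr {A : qo} (s : list A) : Prop :=
  match s with
  | [] => True
  | x :: s' => (forall y, In y s' -> qlt y x) /\ sdecr s'
  end.

Fixpoint antichain {A : qo} (s : list A) : Prop :=
  match s with
  | [] => True
  | x :: s' => (forall y, In y s' -> ~ qle x y /\ ~ qle y x) /\ antichain s'
  end.

Definition o_child (A : qo) (t s : list A) : Prop :=
  (exists x, t = s ++ [x]) /\ bad t.
Definition h_child (A : qo) (t s : list A) : Prop :=
  (exists x, t = s ++ [x]) /\ sdecr t.
Definition w_child (A : qo) (t s : list A) : Prop :=
  (exists x, t = s ++ [x]) /\ antichain t.

(* Comparison of ranks of nodes in well-founded trees, without a type
   of ordinals: r(a) <= r(b) iff every child a' of a has some child b'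
   of b with r(a') <= r(b').  (For well-founded trees this is exactly
   the comparison of the ordinal ranks r(s) = sup{r(t)+1}.) *)
Inductive rank_le {A B : Type} (R : A -> A -> Prop) (S : B -> B -> Prop)
  : A -> B -> Prop :=
| RankLe : forall a b,
    (forall a', R a' a -> exists b', S b' b /\ @rank_le A B R S a' b') ->
    @rank_le A B R S a b.

Definition rank_eq {A B : Type} (R : A -> A -> Prop) (S : B -> B -> Prop)
  (a : A) (b : B) : Prop := rank_le R S a b /\ rank_le S R b a.

(* f(A) = rank of the root [] of the tree given by child relation F A *)

(* Tree whose root rank is sup { f(E') + 1 : P E' }: the root None has
   as children the roots of the f-trees of all E' with P E'. *)
Definition sup_node (P : qo -> Prop) : Type :=
  option { X : { E' : qo & P E' } & list (projT1 X) }.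

Inductive sup_child (P : qo -> Prop) (F : forall A : qo, list A -> list A -> Prop)
  : sup_node P -> sup_node P -> Prop :=
| sc_root : forall X : { E' : qo & P E' }, sup_child P F (Some (existT _ X [])) None
| sc_step : forall (X : { E' : qo & P E' }) (s t : list (projT1 X)),
    F (projT1 X) t s -> sup_child P F (Some (existT _ X t)) (Some (existT _ X s)).

(* Each inequality is proved by simulating one tree inside the other.

   If S_0 > S_1 > ... > S_n is strictly decreasing in P_f(E), pick in each
   S_i an element x_i lying below no element of S_(i+1); then x_0, x_1, ...
   is bad.  All x_i lie in the downward closure of S_0, which order-embeds
   into some approximation E' of E, so the sequence is bad in E' and
   h(P_f(E)) <= sup (o(E') + 1).

   Conversely, every approximation E' maps into E together with a finite
   description G(F) in P_f(E) of the complement of the upward closure of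
   each finite F in E'.  Along a bad sequence x_1, x_2, ... in E' these
   complements shrink strictly: G(x_1..x_i) > G(x_1..x_(i+1)), so
   o(E') + 1 <= h(P_f(E)).

   Both constructions go by induction on the expression; the base case uses
   that a multiplicatively indecomposable ordinal >= omega^omega has no
   largest element, and the trees involved are well founded because the
   approximations are wqos. *)

From Stdlib Require Import List Lia Permutation Classical ClassicalEpsilon.
Import ListNotations.

Record is_qo (A : qo) : Prop := {
  qo_refl : forall x : A, qle x x;
  qo_trans : forall x y z : A, qle x y -> qle y z -> qle x z }.
Arguments qo_refl {A}.
Arguments qo_trans {A}.

Lemma Forall2_qle_refl (A : qo) : is_qo A -> forall u : list A, Forall2 qle u u.
Proof. intros HA u; induction u; constructor; auto using qo_refl. Qed.

Lemma Forall2_qle_trans (A : qo) : is_qo A ->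
  forall u v w : list A, Forall2 qle u v -> Forall2 qle v w -> Forall2 qle u w.
Proof.
  intros HA u v w H; revert w; induction H; intros w' H'; inversion H'; subst;
    constructor; eauto using qo_trans.
Qed.

Lemma Forall2_flip_qle (A : qo) (u v : list A) :
  Forall2 qle u v -> Forall2 (fun a b => qle b a) v u.
Proof. induction 1; constructor; auto. Qed.

Lemma subword_nil_r (A : qo) u : subword A u [] -> u = [].
Proof. intro H; inversion H; auto. Qed.

Lemma subword_trans (A : qo) : is_qo A ->
  forall u v w, subword A u v -> subword A v w -> subword A u w.
Proof.
  intros HA u v w Huv Hvw; revert u Huv.
  induction Hvw as [v0|x y v0 w0 Hxy Hvw IH|v0 y w0 Hvw IH]; intros u Hu.
  - apply subword_nil_r in Hu; subst; constructor.
  - inversion Hu; subst; [constructor|constructor; eauto using qo_trans|apply sw_skip; auto].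
  - apply sw_skip; auto.
Qed.

Lemma subword_in (A : qo) u v :
  subword A u v -> forall a, In a u -> exists b, In b v /\ qle a b.
Proof.
  induction 1; simpl; intros a Ha; [contradiction| |].
  - destruct Ha as [<-|Ha]; [eauto|].
    destruct (IHsubword a Ha) as [b [Hb Hab]]; eauto.
  - destruct (IHsubword a Ha) as [b [Hb Hab]]; eauto.
Qed.

Lemma subword_length (A : qo) u v : subword A u v -> length u <= length v.
Proof. induction 1; simpl; lia. Qed.

Lemma Forall2_subword (A : qo) u v : Forall2 qle u v -> subword A u v.
Proof. induction 1; constructor; auto. Qed.

Lemma subword_Forall2 (A : qo) u v :
  subword A u v -> length u = length v -> Forall2 qle u v.
Proof.
  induction 1; simpl; intros Hl.
  - destruct v; simpl in *; [constructor|discriminate].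
  - constructor; auto.
  - apply subword_length in H; lia.
Qed.

Lemma subword_is_qo (A : qo) : is_qo A -> is_qo (starQO A).
Proof.
  intros HA; split; [|exact (subword_trans A HA)].
  intro u; apply Forall2_subword, Forall2_qle_refl; auto.
Qed.

Lemma mset_emb_iff (A : qo) u v :
  mset_emb A u v <-> exists w r, Permutation v (w ++ r) /\ Forall2 qle u w.
Proof.
  split.
  - induction 1 as [v|x u v1 y v2 Hxy _ [w [r [HP HF]]]]; [exists [], v; auto|].
    exists (y :: w), r; split; auto.
    rewrite <- Permutation_middle; constructor; auto.
  - intros [w [r [HP HF]]]; revert v r HP; induction HF as [|x y u w Hxy HF IH];
      intros v r HP; [constructor|].
    assert (Hy : In y v) by (apply (Permutation_in _ (Permutation_sym HP)); left; auto).
    destruct (in_split _ _ Hy) as [v1 [v2 ->]].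
    constructor; auto.
    apply (IH _ r), Permutation_sym, Permutation_cons_app_inv with (a := y).
    apply Permutation_sym, HP.
Qed.

Lemma Forall2_mset_emb (A : qo) u v : Forall2 qle u v -> mset_emb A u v.
Proof. intros H; apply mset_emb_iff; exists v, []; rewrite app_nil_r; auto. Qed.

Lemma mset_emb_trans (A : qo) : is_qo A ->
  forall u v w, mset_emb A u v -> mset_emb A v w -> mset_emb A u w.
Proof.
  intros HA u v z H1 H2; apply mset_emb_iff in H1 as [w1 [r1 [P1 F1]]], H2 as [w2 [r2 [P2 F2]]].
  destruct (Permutation_Forall2 P1 F2) as [w2' [P3 F3]].
  apply Forall2_app_inv_l in F3 as (a & b & Fa & Fb & ->).
  apply mset_emb_iff; exists a, (b ++ r2); split.
  - rewrite app_assoc; apply (Permutation_trans P2), Permutation_app_tail, P3.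
  - eapply Forall2_qle_trans; eauto.
Qed.

Lemma mset_emb_is_qo (A : qo) : is_qo A -> is_qo (msetQO A).
Proof.
  intros HA; split; [|exact (mset_emb_trans A HA)].
  intro u; apply Forall2_mset_emb, Forall2_qle_refl; auto.
Qed.

Lemma mset_emb_perm_l (A : qo) u u' v :
  mset_emb A u v -> Permutation u u' -> mset_emb A u' v.
Proof.
  intros H HP; apply mset_emb_iff in H as [w [r [P F]]].
  destruct (Permutation_Forall2 HP F) as [w' [Pw F']].
  apply mset_emb_iff; exists w', r; split; auto.
  apply (Permutation_trans P), Permutation_app_tail, Pw.
Qed.

Lemma mset_emb_perm_r (A : qo) u v v' :
  mset_emb A u v -> Permutation v v' -> mset_emb A u v'.
Proof.
  intros H HP; apply mset_emb_iff in H as [w [r [P F]]].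
  apply mset_emb_iff; exists w, r; split; auto.
  apply (Permutation_trans (Permutation_sym HP)), P.
Qed.

Lemma mset_emb_app_l (A : qo) a b v : mset_emb A (a ++ b) v -> mset_emb A a v.
Proof.
  intros H; apply mset_emb_iff in H as [w [r [P F]]].
  apply Forall2_app_inv_l in F as (a' & b' & Fa & Fb & ->).
  apply mset_emb_iff; exists a', (b' ++ r); split; auto.
  rewrite app_assoc; auto.
Qed.

Lemma mset_emb_in (A : qo) u v :
  mset_emb A u v -> forall a, In a u -> exists b, In b v /\ qle a b.
Proof.
  induction 1 as [|x u v1 y v2 Hxy _ IH]; simpl; intros a Ha; [contradiction|].
  destruct Ha as [<-|Ha]; [exists y; split; auto; apply in_or_app; simpl; auto|].
  destruct (IH a Ha) as [b [Hb Hab]]; exists b; split; auto.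
  apply in_app_or in Hb; apply in_or_app; simpl; tauto.
Qed.

Lemma mset_emb_length (A : qo) u v : mset_emb A u v -> length u <= length v.
Proof. induction 1; rewrite ?length_app in *; simpl in *; lia. Qed.

Lemma mset_emb_drop_unreachable (A : qo) u : forall v J, mset_emb A u (v ++ J) ->
  (forall x j, In x u -> In j J -> ~ qle x j) -> mset_emb A u v.
Proof.
  induction u as [|x u IH]; intros v J H HJ; [constructor|].
  inversion H as [|x' u' v1 y v2 Hxy Hu Heq1 Heq2]; subst.
  apply app_eq_app in Heq2 as [m [[-> E2]|[-> E2]]].
  - exfalso; apply (HJ x y); simpl; auto; rewrite E2; apply in_or_app; simpl; auto.
  - destruct m as [|z m]; simpl in E2.
    + subst; exfalso; apply (HJ x y); simpl; auto.
    + injection E2 as -> ->; constructor; auto.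
      apply (IH (v1 ++ m) J); [rewrite <- app_assoc; auto|].
      intros; apply HJ; simpl; auto.
Qed.

Lemma mset_emb_same_length (A : qo) u v : mset_emb A u v -> length u = length v ->
  exists u', Permutation u u' /\ Forall2 qle u' v.
Proof.
  intros H Hl; apply mset_emb_iff in H as [w [r [P F]]].
  pose proof (Forall2_length F) as Hl2; pose proof (Permutation_length P) as Hl3.
  rewrite length_app in Hl3; destruct r; [|simpl in Hl3; lia].
  rewrite app_nil_r in P.
  destruct (Permutation_Forall2 (Permutation_sym P) (Forall2_flip_qle A _ _ F)) as [u' [Pu Fu]].
  exists u'; split; auto.
  clear - Fu; induction Fu; constructor; auto.
Qed.

Lemma mset_emb_map_reflect (A B : qo) (f : A -> B) u : forall v,
  mset_emb B (map f u) (map f v) ->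
  (forall x y, In x u -> In y v -> qle (f x) (f y) -> qle x y) -> mset_emb A u v.
Proof.
  induction u as [|x u IH]; intros v H HR; [constructor|].
  inversion H as [|x' u' v1 y v2 Hxy Hu Heq1 Heq2]; subst.
  symmetry in Heq2; apply map_eq_app in Heq2 as (l1 & l2 & -> & <- & E2).
  apply map_eq_cons in E2 as (y' & l2' & -> & <- & <-).
  constructor.
  - apply HR; simpl; auto; apply in_or_app; simpl; auto.
  - apply IH; [rewrite map_app; auto|].
    intros a b Ha Hb; apply HR; simpl; auto.
    apply in_app_or in Hb; apply in_or_app; simpl; tauto.
Qed.

Lemma hoare_is_qo (A : qo) : is_qo A -> is_qo (pfQO A).
Proof.
  intros HA; split; [intros S a Ha; eauto using qo_refl|].
  intros S1 S2 S3 H1 H2 a Ha.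
  destruct (H1 a Ha) as [b [Hb Hab]]; destruct (H2 b Hb) as [c [Hc Hbc]].
  eauto using qo_trans.
Qed.

Lemma word_is_qo (W : word) : is_qo (wordQO W).
Proof. split; [apply wle_refl|apply wle_trans]. Qed.

Lemma sum_is_qo (A B : qo) : is_qo A -> is_qo B -> is_qo (sumQO A B).
Proof.
  intros HA HB; split; [intros [a|b]; [exact (qo_refl HA a)|exact (qo_refl HB b)]|].
  intros [x|x] [y|y] [z|z]; simpl; try tauto; eauto using qo_trans.
Qed.

Lemma prod_is_qo (A B : qo) : is_qo A -> is_qo B -> is_qo (prodQO A B).
Proof.
  intros HA HB; split; [intros [a b]; exact (conj (qo_refl HA a) (qo_refl HB b))|].
  intros x y z [? ?] [? ?]; split; eauto using qo_trans.
Qed.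

Lemma pow_is_qo (A : qo) n : is_qo A -> is_qo (powQO A n).
Proof. intros HA; split; intros; simpl in *; eauto using Forall2_qle_refl, Forall2_qle_trans. Qed.

Lemma msetn_is_qo (A : qo) n : is_qo A -> is_qo (msetnQO A n).
Proof.
  intros HA; split; intros; simpl in *;
    [apply (qo_refl (mset_emb_is_qo A HA))|eapply (qo_trans (mset_emb_is_qo A HA)); eauto].
Qed.

Lemma interp_is_qo (e : expr) : is_qo (interp e).
Proof.
  induction e; simpl; auto using word_is_qo, sum_is_qo, prod_is_qo,
    subword_is_qo, mset_emb_is_qo, hoare_is_qo.
Qed.

(** * Almost full quasi-orders *)

Definition almost_full (A : qo) : Prop :=
  forall f : nat -> A, exists i j, i < j /\ qle (f i) (f j).

Definition wqo (A : qo) : Prop := is_qo A /\ almost_full A.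

Definition strictly_increasing (phi : nat -> nat) : Prop :=
  forall k l, k < l -> phi k < phi l.

Lemma strictly_increasing_S (phi : nat -> nat) :
  (forall k, phi k < phi (S k)) -> strictly_increasing phi.
Proof. intros H k l Hkl; induction Hkl; [apply H|specialize (H m); lia]. Qed.

Lemma infinite_selection (P : nat -> Prop) : (forall N, exists j, N <= j /\ P j) ->
  exists phi, strictly_increasing phi /\ forall k, P (phi k).
Proof.
  intros H; destruct (choice _ H) as [g Hg].
  set (next i := g (S i)); exists (fun k => Nat.iter k next (g 0)); split.
  - apply strictly_increasing_S; intro k; exact (proj1 (Hg (S (Nat.iter k next (g 0))))).
  - intros [|k]; apply Hg.
Qed.

Lemma infinite_pigeonhole (A : Type) (L : list A) (Q : A -> nat -> Prop) :
  (forall j, 1 <= j -> exists a, In a L /\ Q a j) ->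
  exists a, In a L /\ forall N, exists j, N <= j /\ Q a j.
Proof.
  revert Q; induction L as [|x L IH]; intros Q H.
  - destruct (H 1) as [a [[] _]]; auto.
  - destruct (classic (forall N, exists j, N <= j /\ Q x j)) as [Hx|Hx]; [exists x; simpl; auto|].
    apply not_all_ex_not in Hx as [N HN].
    destruct (IH (fun a j => Q a (N + j))) as [a [Ha Hq]].
    + intros j Hj; destruct (H (N + j)) as [a [[<-|Ha] Hq]]; [lia| |eauto].
      exfalso; apply HN; exists (N + j); split; [lia|auto].
    + exists a; split; [simpl; auto|]; intro M; destruct (Hq M) as [j [Hj Hq']].
      exists (N + j); split; [lia|auto].
Qed.

(* Either infinitely many terms start no increasing pair (contradicting almost
   fullness), or from some point on every term has a larger successor. *)
Lemma almost_full_chain_subseq (A : qo) : is_qo A -> almost_full A ->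
  forall f : nat -> A, exists phi, strictly_increasing phi /\
    forall k l, k < l -> qle (f (phi k)) (f (phi l)).
Proof.
  intros HA AF f.
  destruct (classic (forall N, exists i, N <= i /\ forall j, i < j -> ~ qle (f i) (f j)))
    as [Hinf|Hfin].
  - exfalso; destruct (infinite_selection _ Hinf) as [phi [Hm Hp]].
    destruct (AF (fun k => f (phi k))) as [i [j [Hij Hle]]].
    apply (Hp i (phi j)); auto.
  - apply not_all_ex_not in Hfin as [N HN].
    assert (Hn : forall i, exists j, N <= i -> i < j /\ qle (f i) (f j)).
    { intro i; destruct (classic (N <= i)) as [Hi|Hi]; [|exists 0; tauto].
      destruct (classic (exists j, i < j /\ qle (f i) (f j))) as [[j Hj]|Hj]; [eauto|].
      exfalso; apply HN; exists i; split; auto; intros j Hij Hle; apply Hj; eauto. }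
    destruct (choice _ Hn) as [g Hg].
    set (phi k := Nat.iter k g N).
    assert (Hstep : forall k, N <= phi k /\ phi k < phi (S k) /\ qle (f (phi k)) (f (phi (S k)))).
    { induction k as [|k [IH1 [IH2 IH3]]]; [apply (conj (le_n N)), Hg; auto|].
      assert (N <= phi (S k)) by lia; split; auto; apply Hg; auto. }
    exists phi; split; [apply strictly_increasing_S; intro k; apply Hstep|].
    intros k l Hkl; induction Hkl; [apply Hstep|eapply (qo_trans HA); eauto; apply Hstep].
Qed.

Lemma almost_full_reflect (X Y : qo) (g : X -> Y) :
  (forall x y, qle (g x) (g y) -> qle x y) -> almost_full Y -> almost_full X.
Proof. intros Hr AF f; destruct (AF (fun k => g (f k))) as [i [j [Hij Hle]]]; eauto. Qed.

Lemma almost_full_sum (A B : qo) :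
  almost_full A -> almost_full B -> almost_full (sumQO A B).
Proof.
  intros AFA AFB f.
  destruct (classic (forall N, exists j, N <= j /\ exists a, f j = inl a)) as [Hinf|Hfin].
  - destruct (infinite_selection _ Hinf) as [phi [Hm Hp]]; destruct (Hp 0) as [a0 _].
    destruct (AFA (fun k => match f (phi k) with inl a => a | inr _ => a0 end))
      as [i [j [Hij Hle]]].
    exists (phi i), (phi j); split; auto.
    destruct (Hp i) as [ai Hi], (Hp j) as [aj Hj]; rewrite Hi, Hj in *; auto.
  - apply not_all_ex_not in Hfin as [N HN].
    assert (Hr : forall j, N <= j -> exists b, f j = inr b).
    { intros j Hj; destruct (f j) eqn:E; eauto; exfalso; apply HN; eauto. }
    destruct (Hr N (le_n N)) as [b0 _].
    destruct (AFB (fun k => match f (N + k) with inr b => b | inl _ => b0 end))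
      as [i [j [Hij Hle]]].
    exists (N + i), (N + j); split; [lia|].
    destruct (Hr (N + i)) as [bi Hi], (Hr (N + j)) as [bj Hj]; try lia.
    rewrite Hi, Hj in *; auto.
Qed.

Lemma almost_full_prod (A B : qo) : is_qo A ->
  almost_full A -> almost_full B -> almost_full (prodQO A B).
Proof.
  intros HA AFA AFB f.
  destruct (almost_full_chain_subseq A HA AFA (fun k => fst (f k))) as [phi [Hm Hp]].
  destruct (AFB (fun k => snd (f (phi k)))) as [i [j [Hij Hle]]].
  exists (phi i), (phi j); split; auto; split; auto.
Qed.

Lemma length_tl_S (A : Type) (l : list A) n : length l = S n -> length (tl l) = n.
Proof. rewrite length_tl; lia. Qed.

(* A tuple of length [S n] is reflected by the pair (head, tail). *)
Lemma almost_full_pow (A : qo) : is_qo A -> almost_full A ->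
  forall n, almost_full (powQO A n).
Proof.
  intros HA AF n; induction n as [|n IH]; intro f.
  - exists 0, 1; split; auto.
    destruct (f 0) as [[|] H0], (f 1) as [[|] H1]; try discriminate; constructor.
  - destruct (f 0) as [[|a0 l0] H0]; [discriminate|].
    refine (almost_full_reflect (powQO A (S n)) (prodQO A (powQO A n))
      (fun x => (hd a0 (proj1_sig x), exist _ (tl (proj1_sig x)) (length_tl_S _ _ _ (proj2_sig x))))
      _ (almost_full_prod _ _ HA AF IH) f).
    intros [[|a l] Hl] [[|b m] Hm]; try discriminate; intros [Hab Hlm]; constructor; auto.
Qed.

Lemma almost_full_msetn (A : qo) : is_qo A -> almost_full A ->
  forall n, almost_full (msetnQO A n).
Proof.
  intros HA AF n.
  apply (almost_full_reflect (msetnQO A n) (powQO A n) (fun x => x)).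
  - intros x y; apply Forall2_mset_emb.
  - apply almost_full_pow; auto.
Qed.

Lemma bad_snoc_inv (A : qo) (l : list A) y : bad (l ++ [y]) -> forall x, In x l -> ~ qle x y.
Proof.
  induction l as [|a l IH]; simpl; [tauto|].
  intros [H1 H2] x [<-|Hx]; [apply H1, in_or_app; simpl; auto|auto].
Qed.

Lemma bad_snoc (A : qo) (l : list A) y :
  bad l -> (forall x, In x l -> ~ qle x y) -> bad (l ++ [y]).
Proof.
  induction l as [|a l IH]; simpl; intros Hb Hy; [split; auto|].
  destruct Hb as [H1 H2]; split; auto.
  intros z Hz; apply in_app_or in Hz as [Hz|[<-|[]]]; auto.
Qed.

Lemma bad_map (A B : qo) (f : A -> B) l :
  (forall x y, qle (f x) (f y) -> qle x y) -> bad l -> bad (map f l).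
Proof.
  intros Hf; induction l as [|a l IH]; simpl; auto; intros [H1 H2]; split; auto.
  intros y Hy Hle; apply in_map_iff in Hy as [b [<- Hb]]; apply (H1 b Hb); auto.
Qed.

Lemma not_acc_o_child (A : qo) (t : list A) : ~ Acc (o_child A) t ->
  exists x, ~ Acc (o_child A) (t ++ [x]) /\ bad (t ++ [x]).
Proof.
  intros Ht; apply NNPP; intro Hn; apply Ht; constructor.
  intros t' [[x ->] Hb]; apply NNPP; intro Hx; apply Hn; eauto.
Qed.

(* An infinite branch of the tree, built by dependent choice, would be an
   infinite bad sequence. *)
Lemma almost_full_acc_bad (A : qo) : almost_full A -> Acc (o_child A) [].
Proof.
  intros AF; apply NNPP; intro Hna.
  destruct (choice (fun t (x : A) => ~ Acc (o_child A) (proj1_sig t ++ [x]) /\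
                                       bad (proj1_sig t ++ [x]))
              (fun t : {t | ~ Acc (o_child A) t} => not_acc_o_child A _ (proj2_sig t)))
    as [nx Hnx].
  set (h := fix h n : {t | ~ Acc (o_child A) t} := match n with
         | 0 => exist _ [] Hna
         | S n' => exist _ (proj1_sig (h n') ++ [nx (h n')]) (proj1 (Hnx (h n'))) end).
  assert (Hh : forall n, proj1_sig (h n) = map (fun k => nx (h k)) (seq 0 n)).
  { induction n as [|n IH]; [reflexivity|].
    simpl proj1_sig; rewrite IH, seq_S, map_app; reflexivity. }
  destruct (AF (fun k => nx (h k))) as [i [j [Hij Hle]]].
  destruct (Hnx (h j)) as [_ Hb]; rewrite Hh in Hb.
  apply (bad_snoc_inv _ _ _ Hb (nx (h i))); auto.
  apply (in_map (fun k => nx (h k))), in_seq; lia.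
Qed.

(* Induction on the bad sequence [t] of elements below no element of the sets:
   if [S] were bad, some [a] in [S 0] would be below no element of infinitely
   many [S j], and these [S j] avoid the bad sequence [t ++ [a]]. *)
Lemma almost_full_pf_avoiding (A : qo) (t : list A) : Acc (o_child A) t -> bad t ->
  forall S : nat -> pfQO A, (forall i x a, In x (S i) -> In a t -> ~ qle a x) ->
  exists i j, i < j /\ qle (S i) (S j).
Proof.
  induction 1 as [t _ IH]; intros Hb S HS; apply NNPP; intro Hbad.
  assert (Hc : forall j, 1 <= j -> exists a, In a (S 0) /\ forall b, In b (S j) -> ~ qle a b).
  { intros j Hj; apply NNPP; intro Hn; apply Hbad; exists 0, j; split; [lia|].
    intros a Ha; apply NNPP; intro Hn2; apply Hn; exists a; split; auto.
    intros b Hb' Hab; apply Hn2; eauto. }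
  destruct (infinite_pigeonhole _ _ _ Hc) as [a [Ha Hinf]].
  destruct (infinite_selection _ Hinf) as [phi [Hm Hp]].
  assert (Hb' : bad (t ++ [a])) by (apply bad_snoc; auto; intros x Hx; apply (HS 0 a x Ha Hx)).
  destruct (IH (t ++ [a])) with (S := fun k => S (phi k)) as [i [j [Hij Hle]]]; auto.
  - split; eauto.
  - intros i x c Hx Hc'; apply in_app_or in Hc' as [Hc'|[<-|[]]]; [apply (HS (phi i) x c Hx Hc')|].
    apply (Hp i); auto.
  - apply Hbad; exists (phi i), (phi j); split; auto.
Qed.

Lemma almost_full_pf (A : qo) : almost_full A -> almost_full (pfQO A).
Proof.
  intros AF S; apply (almost_full_pf_avoiding A [] (almost_full_acc_bad A AF)); simpl; auto.
Qed.

(** * Ordinals *)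

Section Word.
Variable W : word.
Notation le := (@wle W).
Notation lt := (wlt W).

Lemma wlt_wle x y : lt x y -> le x y. Proof. intros [H _]; auto. Qed.

Lemma not_wle_wlt x y : ~ le x y -> lt y x.
Proof. intros H; split; auto; destruct (wle_total W x y); tauto. Qed.

Lemma not_wlt_wle x y : ~ lt x y -> le y x.
Proof. intros H; apply NNPP; intro H'; apply H, not_wle_wlt, H'. Qed.

Lemma wlt_wle_trans x y z : lt x y -> le y z -> lt x z.
Proof.
  intros [H1 H2] H3; split; [eapply wle_trans; eauto|].
  intro H4; apply H2; eapply wle_trans; eauto.
Qed.

Lemma wle_wlt_trans x y z : le x y -> lt y z -> lt x z.
Proof.
  intros H1 [H2 H3]; split; [eapply wle_trans; eauto|].
  intro H4; apply H3; eapply wle_trans; eauto.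
Qed.

Lemma wlt_irrefl x : ~ lt x x. Proof. intros [_ H]; apply H, wle_refl. Qed.

Lemma wlt_trans x y z : lt x y -> lt y z -> lt x z.
Proof. intros H1 H2; eapply wlt_wle_trans; eauto using wlt_wle. Qed.

Lemma word_least (P : W -> Prop) : (exists x, P x) -> exists m, P m /\ forall y, P y -> le m y.
Proof.
  intros [x Hx]; induction x as [x IH] using (well_founded_ind (wlt_wf W)).
  destruct (classic (exists y, P y /\ lt y x)) as [[y [Hy Hyx]]|Hn]; [apply (IH y); auto|].
  exists x; split; auto; intros y Hy; apply NNPP; intro H.
  apply Hn; exists y; split; auto; apply not_wle_wlt; auto.
Qed.

Lemma almost_full_word : almost_full (wordQO W).
Proof.
  intro f; destruct (word_least (fun x => exists i, f i = x)) as [m [[i <-] Hm]];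
    [exists (f 0), 0; reflexivity|].
  exists i, (S i); split; auto; apply Hm; eauto.
Qed.

Lemma seg_wqo w : wqo (segQO W w).
Proof.
  split; [split; intros; simpl in *; eauto using wle_refl, wle_trans|].
  apply (almost_full_reflect (segQO W w) (wordQO W) (@proj1_sig _ _)); auto.
  apply almost_full_word.
Qed.

Lemma seg_strictly_increasing_ge (x : W) (h : seg W x -> W) :
  (forall a b : seg W x, lt (proj1_sig a) (proj1_sig b) -> lt (h a) (h b)) ->
  forall a : seg W x, le (proj1_sig a) (h a).
Proof.
  intros Hh [a Ha]; simpl; revert Ha.
  induction a as [a IH] using (well_founded_ind (wlt_wf W)); intros Ha.
  apply NNPP; intro Hn; apply not_wle_wlt in Hn.
  assert (Hb : lt (h (exist _ a Ha)) x) by (eapply wlt_trans; eauto).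
  specialize (IH _ Hn Hb).
  specialize (Hh (exist (fun y => lt y x) _ Hb) (exist _ a Ha) Hn); simpl in Hh.
  apply (wlt_irrefl (h (exist _ a Ha))); eapply wle_wlt_trans; eauto.
Qed.

(* If [f] embedded the lexicographic product [a2 x x] into [w <= x], then
   [b |-> f (a0, b)] would be increasing on [x], so [f (a0, v) >= v] for
   [v := f (a1, z)], whereas lexicographically [f (a0, v) < f (a1, z)]. *)
Lemma mult_indec_gt (x z a0 a1 a2 : W) : lt z x -> lt a0 a1 -> lt a1 a2 ->
  forall w (f : seg W a2 * seg W x -> seg W w),
    strict_incr (lexlt_prod W x a2) (fun u v => lt (proj1_sig u) (proj1_sig v)) f ->
    lt x w.
Proof.
  intros Hz H01 H12 w f Hf; apply not_wle_wlt; intro Hwx.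
  set (A0 := exist (fun y => lt y a2) a0 (wlt_trans _ _ _ H01 H12)).
  set (A1 := exist (fun y => lt y a2) a1 H12).
  set (Z := exist (fun y => lt y x) z Hz).
  set (h a := proj1_sig (f (A0, a))).
  assert (Hh : forall a b : seg W x, lt (proj1_sig a) (proj1_sig b) -> lt (h a) (h b))
    by (intros a b Hab; apply (Hf (A0, a) (A0, b)); right; simpl; auto).
  set (v := proj1_sig (f (A1, Z))).
  set (V := exist (fun y => lt y x) v (wlt_wle_trans _ _ _ (proj2_sig (f (A1, Z))) Hwx)).
  assert (Hlt : lt (h V) v) by (apply (Hf (A0, V) (A1, Z)); left; simpl; auto).
  apply (wlt_irrefl v); eapply wle_wlt_trans; [exact (seg_strictly_increasing_ge x h Hh V)|auto].
Qed.

Lemma noninc_singleton (n : nat) : noninc [n].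
Proof. split; [intros _ []|exact I]. Qed.

Lemma mult_indec_unbounded : mult_indec W -> ge_omega_omega W -> forall x : W, exists y, lt x y.
Proof.
  intros MI [g Hg] x.
  set (o0 := exist noninc [] I : omega_omega).
  set (o1 := exist noninc [0] (noninc_singleton 0) : omega_omega).
  set (o2 := exist noninc [1] (noninc_singleton 1) : omega_omega).
  assert (H01 : lt (g o0) (g o1)) by (apply Hg; simpl; auto).
  assert (H12 : lt (g o1) (g o2)) by (apply Hg; simpl; auto).
  destruct (classic (exists z, lt z x)) as [[z Hz]|Hn].
  - destruct (MI x (g o2)) as [w [f Hf]]; exists w.
    exact (mult_indec_gt x z _ _ _ Hz H01 H12 w f Hf).
  - exists (g o1); eapply wle_wlt_trans; [|exact H01].
    apply not_wlt_wle; intro H; apply Hn; exists (g o0); auto.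
Qed.

End Word.

Section Successor.
Variable W : word.
Hypothesis unbounded : forall x : W, exists y, wlt W x y.

Lemma succ_exists (x : W) : exists s, wlt W x s /\ forall y, wlt W x y -> wle W s y.
Proof. apply word_least; auto. Qed.

Definition succ (x : W) : W := proj1_sig (constructive_indefinite_description _ (succ_exists x)).

Lemma succ_gt x : wlt W x (succ x).
Proof. exact (proj1 (proj2_sig (constructive_indefinite_description _ (succ_exists x)))). Qed.

Lemma succ_least x y : wlt W x y -> wle W (succ x) y.
Proof. exact (proj2 (proj2_sig (constructive_indefinite_description _ (succ_exists x))) y). Qed.

Lemma succ_mono x y : wle W x y -> wle W (succ x) (succ y).
Proof. intros H; apply succ_least; eapply wle_wlt_trans; eauto using succ_gt. Qed.

Lemma succ_reflect x y : wle W (succ x) (succ y) -> wle W x y.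
Proof.
  intros H; apply NNPP; intro Hn; apply not_wle_wlt, succ_least in Hn.
  apply (wlt_irrefl W (succ x)), (wle_wlt_trans _ _ _ _ (wle_trans W _ _ _ H Hn)), succ_gt.
Qed.

Definition succ_iter (k : nat) (x : W) : W := Nat.iter k succ x.

Lemma succ_iter_mono k x y : wle W x y -> wle W (succ_iter k x) (succ_iter k y).
Proof. induction k; simpl; auto using succ_mono. Qed.

Lemma succ_iter_reflect k x y : wle W (succ_iter k x) (succ_iter k y) -> wle W x y.
Proof. induction k; simpl; auto using succ_reflect. Qed.

Lemma succ_iter_lt i k x : i < k -> wlt W (succ_iter i x) (succ_iter k x).
Proof. induction 1; simpl; eauto using wlt_trans, succ_gt. Qed.

Lemma succ_iter_le i k x : i <= k -> wle W (succ_iter i x) (succ_iter k x).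
Proof.
  intros H; destruct (PeanoNat.Nat.eq_dec i k) as [->|]; [apply wle_refl|].
  apply wlt_wle, succ_iter_lt; lia.
Qed.

End Successor.

Lemma wpo_iso_refl (X : qo) : is_qo X -> wpo_iso X X.
Proof.
  intros HX; exists (fun x => x); split; [tauto|].
  intro b; exists b; split; apply qo_refl; auto.
Qed.

Lemma wpo_iso_qo (X Y : qo) : wpo_iso X Y -> is_qo Y -> is_qo X.
Proof.
  intros [f [Hf _]] HY; split; [intro x; apply Hf, qo_refl; auto|].
  intros x y z H1 H2; apply Hf; eapply (qo_trans HY); apply Hf; eauto.
Qed.

Lemma wpo_iso_wqo (X Y : qo) : wpo_iso X Y -> wqo Y -> wqo X.
Proof.
  intros Hi [HY AF]; split; [apply (wpo_iso_qo X Y Hi HY)|].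
  destruct Hi as [f [Hf _]]; apply (almost_full_reflect X Y f); auto; apply Hf.
Qed.

Lemma approx_wqo (e : expr) : forall X, approx e X -> wqo X.
Proof.
  induction e as [W m g|e1 IH1 e2 IH2|e1 IH1 e2 IH2|e1 IH1|e1 IH1|e1 IH1];
    simpl; intros X HX.
  - destruct HX as [w Hw]; apply (wpo_iso_wqo _ _ Hw), seg_wqo.
  - destruct HX as [A [B [HA [HB Hi]]]]; apply (wpo_iso_wqo _ _ Hi).
    destruct (IH1 A HA) as [QA AFA], (IH2 B HB) as [QB AFB].
    split; [apply sum_is_qo|apply almost_full_sum]; auto.
  - destruct HX as [A [B [HA [HB Hi]]]]; apply (wpo_iso_wqo _ _ Hi).
    destruct (IH1 A HA) as [QA AFA], (IH2 B HB) as [QB AFB].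
    split; [apply prod_is_qo|apply almost_full_prod]; auto.
  - destruct HX as [A [n [HA Hi]]]; apply (wpo_iso_wqo _ _ Hi).
    destruct (IH1 A HA) as [QA AFA]; split; [apply pow_is_qo|apply almost_full_pow]; auto.
  - destruct HX as [A [n [HA Hi]]]; apply (wpo_iso_wqo _ _ Hi).
    destruct (IH1 A HA) as [QA AFA]; split; [apply msetn_is_qo|apply almost_full_msetn]; auto.
  - destruct HX as [A [HA Hi]]; apply (wpo_iso_wqo _ _ Hi).
    destruct (IH1 A HA) as [QA AFA]; split; [apply hoare_is_qo|apply almost_full_pf]; auto.
Qed.

(** * Lower bound: complements of upward closures *)

(* [G F] is a finite set of [T] that, read through [psi], describes the
   complement in [X] of the upward closure of [F] (within the domain [D]). *)
Record complement_rep (X : qo) (D : X -> Prop) (T : qo) (psi : X -> T)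
    (G : list X -> list T) : Prop := {
  rep_covers : forall F y, (forall f, In f F -> D f) -> D y ->
    (forall f, In f F -> ~ qle f y) -> exists g, In g (G F) /\ qle (psi y) g;
  rep_avoids : forall F f g, (forall f, In f F -> D f) -> In f F -> In g (G F) ->
    ~ qle (psi f) g;
  rep_antitone : forall F F', (forall f, In f F' -> D f) -> incl F F' ->
    @qle (pfQO T) (G F') (G F) }.

Lemma complement_rep_ext (X T : qo) D psi psi' G :
  (forall x, D x -> psi x = psi' x) ->
  complement_rep X D T psi G -> complement_rep X D T psi' G.
Proof.
  intros Hext [HC HA HT]; split; auto.
  - intros F y HF Hy Hn; rewrite <- Hext by auto; apply HC; auto.
  - intros F f g HF Hf; rewrite <- Hext by auto; apply HA; auto.
Qed.

Lemma complement_rep_restrict (X T : qo) D D' psi G : (forall x, D' x -> D x) ->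
  complement_rep X D T psi G -> complement_rep X D' T psi G.
Proof. intros HD [HC HA HT]; split; eauto. Qed.

Lemma complement_rep_transport (X Y T T' : qo) DX DY psi G (f : X -> Y) (h : T -> T') :
  complement_rep Y DY T psi G ->
  (forall x y, DX x -> DX y -> qle (f x) (f y) -> qle x y) ->
  (forall x, DX x -> DY (f x)) ->
  (forall s t, qle s t <-> qle (h s) (h t)) ->
  complement_rep X DX T' (fun x => h (psi (f x))) (fun F => map h (G (map f F))).
Proof.
  intros [HC HA HT] Hr HD Hh.
  assert (Hmap : forall F, (forall x, In x F -> DX x) -> forall y, In y (map f F) -> DY y)
    by (intros F HF y Hy; apply in_map_iff in Hy as [x [<- Hx]]; auto).
  split.
  - intros F y HF Hy Hn.
    destruct (HC (map f F) (f y) (Hmap F HF) (HD y Hy)) as [g [Hg Hle]].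
    + intros z Hz Hle; apply in_map_iff in Hz as [x [<- Hx]]; apply (Hn x); auto.
    + exists (h g); split; [apply in_map|apply Hh]; auto.
  - intros F x g HF Hx Hg Hle; apply in_map_iff in Hg as [g' [<- Hg']].
    apply (HA (map f F) (f x) g' (Hmap F HF)); auto using in_map; apply Hh; auto.
  - intros F F' HF Hi g' Hg'; apply in_map_iff in Hg' as [g [<- Hg]].
    destruct (HT (map f F) (map f F') (Hmap F' HF) (incl_map f Hi) g Hg) as [k [Hk Hle]].
    exists (h k); split; [apply in_map|apply Hh]; auto.
Qed.

Lemma complement_rep_iso X Y T psi G : wpo_iso X Y ->
  complement_rep Y (fun _ => True) T psi G ->
  exists psi' G', complement_rep X (fun _ => True) T psi' G'.
Proof.
  intros [f [Hf _]] HS; do 2 eexists.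
  apply (complement_rep_transport X Y T T _ _ psi G f (fun t => t) HS); try tauto.
  intros x y _ _; apply Hf.
Qed.

Definition lefts {A B : Type} (F : list (A + B)) : list A :=
  flat_map (fun x => match x with inl a => [a] | inr _ => [] end) F.
Definition rights {A B : Type} (F : list (A + B)) : list B :=
  flat_map (fun x => match x with inr b => [b] | inl _ => [] end) F.

Lemma in_lefts {A B : Type} (F : list (A + B)) a : In a (lefts F) <-> In (inl a) F.
Proof.
  unfold lefts; rewrite in_flat_map; split; [|intros H; exists (inl a); simpl; auto].
  intros [[x|x] [Hx Ha]]; simpl in Ha; [destruct Ha as [<-|[]]; auto|contradiction].
Qed.

Lemma in_rights {A B : Type} (F : list (A + B)) b : In b (rights F) <-> In (inr b) F.
Proof.
  unfold rights; rewrite in_flat_map; split; [|intros H; exists (inr b); simpl; auto].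
  intros [[x|x] [Hx Ha]]; simpl in Ha; [contradiction|destruct Ha as [<-|[]]; auto].
Qed.

Lemma complement_rep_sum (A B T1 T2 : qo) p1 G1 p2 G2 :
  complement_rep A (fun _ => True) T1 p1 G1 -> complement_rep B (fun _ => True) T2 p2 G2 ->
  complement_rep (sumQO A B) (fun _ => True) (sumQO T1 T2)
    (fun x => match x with inl a => inl (p1 a) | inr b => inr (p2 b) end)
    (fun F => map inl (G1 (lefts F)) ++ map inr (G2 (rights F))).
Proof.
  intros [C1 A1 T1'] [C2 A2 T2']; split.
  - intros F [a|b] _ _ Hn.
    + destruct (C1 (lefts F) a) as [g [Hg Hle]]; auto.
      { intros f Hf; apply in_lefts in Hf; exact (Hn _ Hf). }
      exists (inl g); split; auto; apply in_or_app; left; apply in_map; auto.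
    + destruct (C2 (rights F) b) as [g [Hg Hle]]; auto.
      { intros f Hf; apply in_rights in Hf; exact (Hn _ Hf). }
      exists (inr g); split; auto; apply in_or_app; right; apply in_map; auto.
  - intros F [a|b] g _ Hf Hg; apply in_app_or in Hg as [Hg|Hg];
      apply in_map_iff in Hg as [g' [<- Hg']]; simpl; auto.
    + apply (A1 (lefts F)); auto; apply in_lefts; auto.
    + apply (A2 (rights F)); auto; apply in_rights; auto.
  - intros F F' _ Hi g' Hg'; apply in_app_or in Hg' as [Hg|Hg];
      apply in_map_iff in Hg as [g [<- Hg]].
    + destruct (T1' (lefts F) (lefts F')) with (a := g) as [k [Hk Hle]]; auto.
      { intros z Hz; apply in_lefts in Hz; apply in_lefts; auto. }
      exists (inl k); split; auto; apply in_or_app; left; apply in_map; auto.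
    + destruct (T2' (rights F) (rights F')) with (a := g) as [k [Hk Hle]]; auto.
      { intros z Hz; apply in_rights in Hz; apply in_rights; auto. }
      exists (inr k); split; auto; apply in_or_app; right; apply in_map; auto.
Qed.

Fixpoint splittings {A B : Type} (F : list (A * B)) : list (list A * list B) :=
  match F with
  | [] => [([], [])]
  | (a, b) :: F' => map (fun p => (a :: fst p, snd p)) (splittings F') ++
                    map (fun p => (fst p, b :: snd p)) (splittings F')
  end.

Lemma splittings_choose {A B : Type} (F : list (A * B)) (Q1 : A -> Prop) (Q2 : B -> Prop) :
  (forall a b, In (a, b) F -> Q1 a \/ Q2 b) ->
  exists p, In p (splittings F) /\ (forall a, In a (fst p) -> Q1 a) /\
                                   (forall b, In b (snd p) -> Q2 b).
Proof.
  induction F as [|[a b] F IH]; simpl; intros H; [exists ([], []); simpl; tauto|].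
  destruct IH as [p [Hp [H1 H2]]]; [intros; apply H; auto|].
  destruct (H a b (or_introl eq_refl)) as [Ha|Hb].
  - exists (a :: fst p, snd p); split; [apply in_or_app; left; apply in_map_iff; eauto|].
    simpl; split; auto; intros x [<-|Hx]; auto.
  - exists (fst p, b :: snd p); split; [apply in_or_app; right; apply in_map_iff; eauto|].
    simpl; split; auto; intros x [<-|Hx]; auto.
Qed.

Lemma splittings_cover {A B : Type} (F : list (A * B)) p a b :
  In p (splittings F) -> In (a, b) F -> In a (fst p) \/ In b (snd p).
Proof.
  revert p; induction F as [|[a' b'] F IH]; simpl; intros p Hp Hab; [contradiction|].
  apply in_app_or in Hp as [Hp|Hp]; apply in_map_iff in Hp as [q [<- Hq]]; simpl;
    (destruct Hab as [E|Hab]; [injection E as -> ->; auto|destruct (IH q Hq Hab); auto]).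
Qed.

Lemma splittings_sub {A B : Type} (F : list (A * B)) p : In p (splittings F) ->
  (forall a, In a (fst p) -> exists b, In (a, b) F) /\
  (forall b, In b (snd p) -> exists a, In (a, b) F).
Proof.
  revert p; induction F as [|[a' b'] F IH]; simpl; intros p Hp.
  - destruct Hp as [<-|[]]; simpl; tauto.
  - apply in_app_or in Hp as [Hp|Hp]; apply in_map_iff in Hp as [q [<- Hq]];
      destruct (IH q Hq) as [H1 H2]; simpl;
      split; intros x Hx; try destruct Hx as [<-|Hx]; eauto;
      [destruct (H1 x Hx)|destruct (H2 x Hx)|destruct (H1 x Hx)|destruct (H2 x Hx)]; eauto.
Qed.

Lemma complement_rep_prod (A B T1 T2 : qo) DA DB p1 G1 p2 G2 :
  complement_rep A DA T1 p1 G1 -> complement_rep B DB T2 p2 G2 ->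
  complement_rep (prodQO A B) (fun x => DA (fst x) /\ DB (snd x)) (prodQO T1 T2)
    (fun x => (p1 (fst x), p2 (snd x)))
    (fun F => flat_map (fun p => list_prod (G1 (fst p)) (G2 (snd p))) (splittings F)).
Proof.
  intros [C1 A1 T1'] [C2 A2 T2'].
  assert (HD : forall F p, (forall f, In f F -> DA (fst f) /\ DB (snd f)) ->
            In p (splittings F) ->
            (forall a, In a (fst p) -> DA a) /\ (forall b, In b (snd p) -> DB b)).
  { intros F p HF Hp; destruct (splittings_sub F p Hp) as [H1 H2]; split.
    - intros a Ha; destruct (H1 a Ha) as [b Hb]; apply (HF _ Hb).
    - intros b Hb; destruct (H2 b Hb) as [a Ha]; apply (HF _ Ha). }
  split.
  - intros F [a b] HF [Ha Hb] Hn.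
    destruct (splittings_choose F (fun x => ~ qle x a) (fun y => ~ qle y b)) as [p [Hp [H1 H2]]].
    { intros x y Hxy; destruct (classic (qle x a)); [right|left; auto].
      intro Hy; apply (Hn _ Hxy); split; auto. }
    destruct (HD F p HF Hp) as [Dp1 Dp2].
    destruct (C1 (fst p) a) as [g1 [Hg1 Hl1]], (C2 (snd p) b) as [g2 [Hg2 Hl2]]; auto.
    exists (g1, g2); split; [|split; auto].
    apply in_flat_map; exists p; split; auto; apply in_prod; auto.
  - intros F [a b] [g1 g2] HF Hf Hg [Hl1 Hl2]; simpl in *.
    apply in_flat_map in Hg as [p [Hp Hg]]; apply in_prod_iff in Hg as [Hg1 Hg2].
    destruct (HD F p HF Hp) as [Dp1 Dp2].
    destruct (splittings_cover F p a b Hp Hf) as [Ha|Hb];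
      [apply (A1 (fst p) a g1)|apply (A2 (snd p) b g2)]; auto.
  - intros F F' HF Hi [g1 g2] Hg.
    apply in_flat_map in Hg as [p' [Hp' Hg]]; apply in_prod_iff in Hg as [Hg1 Hg2].
    destruct (splittings_choose F (fun x => In x (fst p')) (fun y => In y (snd p')))
      as [p [Hp [H1 H2]]].
    { intros x y Hxy; apply (splittings_cover F' p' x y Hp'); auto. }
    destruct (HD F' p' HF Hp') as [Dp1 Dp2].
    destruct (T1' (fst p) (fst p')) with (a := g1) as [h1 [Hh1 Hl1]]; auto.
    destruct (T2' (snd p) (snd p')) with (a := g2) as [h2 [Hh2 Hl2]]; auto.
    exists (h1, h2); split; [|split; auto].
    apply in_flat_map; exists p; split; auto; apply in_prod; auto.
Qed.

Definition listwiseQO (A : qo) : qo := QO (list A) (Forall2 qle).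

Definition nil_rep {A T : Type} (F : list (list A)) : list (list T) :=
  match F with [] => [[]] | _ => [] end.

Lemma complement_rep_nil (A T : qo) (psi : A -> T) :
  complement_rep (listwiseQO A) (fun l => length l = 0) (listwiseQO T) (map psi) nil_rep.
Proof.
  split.
  - intros [|f F] [|] HF Hy Hn; try discriminate; [exists []; simpl; auto|].
    exfalso; apply (Hn f); [simpl; auto|].
    specialize (HF f (or_introl eq_refl)); destruct f; [constructor|discriminate].
  - intros [|f F] x g _ Hx Hg; contradiction.
  - intros F [|f' F'] _ Hi g' Hg'; [|contradiction].
    destruct F as [|f F]; [|exfalso; apply (Hi f); simpl; auto].
    destruct Hg' as [<-|[]]; exists []; simpl; auto.
Qed.

(* Tuples of length [S n] are pairs (head, tail), so this is the product case
   iterated. *)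
Lemma complement_rep_listwise (A T : qo) psi G :
  complement_rep A (fun _ => True) T psi G -> forall n,
  exists Gn, complement_rep (listwiseQO A) (fun l => length l = n) (listwiseQO T) (map psi) Gn /\
     forall F g, In g (Gn F) -> length g = n.
Proof.
  intros HS n; induction n as [|n [Gn [HSn Ln]]].
  { exists nil_rep; split; [apply complement_rep_nil|].
    intros [|] g Hg; simpl in Hg; [destruct Hg as [<-|[]]; auto|contradiction]. }
  destruct (classic (inhabited A)) as [[d]|HA0].
  2:{ exists (fun _ => []); split; [split|]; simpl; try tauto.
      intros F [|a y] _ Hy; [discriminate|destruct (HA0 (inhabits a))]. }
  set (uncons (l : list A) := (hd d l, tl l) : prodQO A (listwiseQO A)).
  pose proof (complement_rep_transport (listwiseQO A) (prodQO A (listwiseQO A))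
    (prodQO T (listwiseQO T)) (listwiseQO T) (fun l => length l = S n) _ _ _ uncons
    (fun p => fst p :: snd p) (complement_rep_prod _ _ _ _ _ _ _ _ _ _ HS HSn)) as Hrep.
  eexists; split.
  - refine (complement_rep_ext _ _ _ _ _ _ _ (Hrep _ _ _)).
    + intros [|a l] Hl; [discriminate|reflexivity].
    + intros [|a l] [|b m] Hl Hm [Hab Hlm]; try discriminate; constructor; auto.
    + intros x Hx; split; [exact I|apply length_tl_S, Hx].
    + intros [a l] [b m]; split; [intros [Hab Hlm]; constructor; auto|].
      intros H; inversion H; split; auto.
  - intros F g Hg; apply in_map_iff in Hg as [[g1 gl] [<- Hg]].
    apply in_flat_map in Hg as [p [_ Hg]]; apply in_prod_iff in Hg as [_ Hgl].
    simpl; f_equal; eauto.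
Qed.

Lemma complement_rep_pow (A T : qo) psi G :
  complement_rep A (fun _ => True) T psi G -> forall n,
  exists G', complement_rep (powQO A n) (fun _ => True) (starQO T)
               (fun x => map psi (proj1_sig x)) G'.
Proof.
  intros HS n; destruct (complement_rep_listwise A T psi G HS n) as [Gn [[Cn An Tn] Ln]].
  set (vals (F : list (powQO A n)) := map (@proj1_sig _ _) F).
  assert (Hvals : forall F f, In f (vals F) -> length f = n)
    by (intros F f Hf; apply in_map_iff in Hf as [x [<- _]]; exact (proj2_sig x)).
  exists (fun F => Gn (vals F)); split.
  - intros F y _ _ Hn; destruct (Cn (vals F) (proj1_sig y)) as [g [Hg Hle]].
    + apply Hvals.
    + exact (proj2_sig y).
    + intros f Hf; apply in_map_iff in Hf as [x [<- Hx]]; exact (Hn x Hx).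
    + exists g; split; auto; apply Forall2_subword; auto.
  - intros F f g _ Hf Hg Hle; apply (An (vals F) (proj1_sig f) g (Hvals F)); auto.
    + apply in_map; auto.
    + apply subword_Forall2; auto; rewrite length_map, (proj2_sig f); symmetry; eauto.
  - intros F F' _ Hi g' Hg'.
    destruct (Tn (vals F) (vals F') (Hvals F') (incl_map _ Hi) g' Hg') as [g [Hg Hle]].
    exists g; split; auto; apply Forall2_subword; auto.
Qed.

Fixpoint insertions {A : Type} (x : A) (l : list A) : list (list A) :=
  match l with
  | [] => [[x]]
  | y :: l' => (x :: y :: l') :: map (cons y) (insertions x l')
  end.

Fixpoint permutations {A : Type} (l : list A) : list (list A) :=
  match l with
  | [] => [[]]
  | x :: l' => flat_map (insertions x) (permutations l')
  end.

Lemma in_insertions {A : Type} (x : A) l m :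
  In m (insertions x l) -> exists l1 l2, l = l1 ++ l2 /\ m = l1 ++ x :: l2.
Proof.
  revert m; induction l as [|y l IH]; simpl; intros m Hm.
  - destruct Hm as [<-|[]]; exists [], []; auto.
  - destruct Hm as [<-|Hm]; [exists [], (y :: l); auto|].
    apply in_map_iff in Hm as [m' [<- Hm']]; destruct (IH m' Hm') as [l1 [l2 [-> ->]]].
    exists (y :: l1), l2; auto.
Qed.

Lemma insertions_in {A : Type} (x : A) l1 l2 : In (l1 ++ x :: l2) (insertions x (l1 ++ l2)).
Proof.
  induction l1 as [|y l1 IH]; simpl; [destruct l2; simpl; auto|].
  right; apply in_map; auto.
Qed.

Lemma in_permutations {A : Type} (l m : list A) : In m (permutations l) <-> Permutation l m.
Proof.
  revert m; induction l as [|x l IH]; simpl; intros m; split; intros Hm.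
  - destruct Hm as [<-|[]]; auto.
  - apply Permutation_nil in Hm; auto.
  - apply in_flat_map in Hm as [m' [Hm' Hi]].
    apply in_insertions in Hi as [l1 [l2 [-> ->]]].
    apply Permutation_cons_app, IH, Hm'.
  - assert (Hin : In x m) by (apply (Permutation_in _ Hm); simpl; auto).
    destruct (in_split _ _ Hin) as [l1 [l2 ->]].
    apply in_flat_map; exists (l1 ++ l2); split; [|apply insertions_in].
    apply IH, Permutation_cons_app_inv with (a := x), Hm.
Qed.

(* A multiset is above [f] iff it is listwise above some reordering of [f];
   hence all permutations of the elements of [F] are fed to the tuple case. *)
Lemma complement_rep_msetn (A T : qo) psi G :
  complement_rep A (fun _ => True) T psi G -> forall n,
  exists G', complement_rep (msetnQO A n) (fun _ => True) (msetQO T)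
               (fun x => map psi (proj1_sig x)) G'.
Proof.
  intros HS n; destruct (complement_rep_listwise A T psi G HS n) as [Gn [[Cn An Tn] Ln]].
  set (perms (F : list (msetnQO A n)) := flat_map permutations (map (@proj1_sig _ _) F)).
  assert (Hperms : forall F f, In f (perms F) <->
                     exists x, In x F /\ Permutation (proj1_sig x) f).
  { intros F f; unfold perms; rewrite in_flat_map; split.
    - intros [l [Hl Hp]]; apply in_map_iff in Hl as [x [<- Hx]].
      exists x; split; auto; apply in_permutations; auto.
    - intros [x [Hx Hp]]; exists (proj1_sig x); split; [apply in_map|apply in_permutations]; auto. }
  assert (Hlen : forall F f, In f (perms F) -> length f = n).
  { intros F f Hf; apply Hperms in Hf as [x [_ Hp]].
    rewrite <- (Permutation_length Hp); exact (proj2_sig x). }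
  exists (fun F => Gn (perms F)); split.
  - intros F y _ _ Hn; destruct (Cn (perms F) (proj1_sig y)) as [g [Hg Hle]].
    + apply Hlen.
    + exact (proj2_sig y).
    + intros f Hf Hle; apply Hperms in Hf as [x [Hx Hp]]; apply (Hn x Hx).
      apply mset_emb_perm_l with f; [apply Forall2_mset_emb; auto|apply Permutation_sym; auto].
    + exists g; split; auto; apply Forall2_mset_emb; auto.
  - intros F f g _ Hf Hg Hle; simpl in Hle.
    destruct (mset_emb_same_length T _ _ Hle) as [u' [Hp HF2]].
    { rewrite length_map; transitivity n; [exact (proj2_sig f)|symmetry; eauto]. }
    apply Permutation_sym, Permutation_map_inv in Hp as [f' [-> Hp]].
    apply (An (perms F) f' g (Hlen F)); auto.
    apply Hperms; exists f; split; auto; apply Permutation_sym; auto.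
  - intros F F' _ Hi g' Hg'.
    destruct (Tn (perms F) (perms F') (Hlen F')) with (a := g') as [g [Hg Hle]]; auto.
    + intros z Hz; apply Hperms in Hz as [x [Hx Hp]]; apply Hperms; eauto.
    + exists g; split; auto; apply Forall2_mset_emb; auto.
Qed.

Fixpoint selections {A : Type} (F : list (list A)) : list (list A) :=
  match F with
  | [] => [[]]
  | f :: F' => flat_map (fun a => map (cons a) (selections F')) f
  end.

Lemma selections_choose {A : Type} (F : list (list A)) (Q : A -> Prop) :
  (forall f, In f F -> exists a, In a f /\ Q a) ->
  exists c, In c (selections F) /\ forall a, In a c -> Q a.
Proof.
  induction F as [|f F IH]; simpl; intros H; [exists []; simpl; tauto|].
  destruct IH as [c [Hc Hq]]; [intros; apply H; auto|].
  destruct (H f (or_introl eq_refl)) as [a [Ha Hqa]].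
  exists (a :: c); split; [apply in_flat_map; exists a; split; auto; apply in_map; auto|].
  intros x [<-|Hx]; auto.
Qed.

Lemma selections_hit {A : Type} (F : list (list A)) c f :
  In c (selections F) -> In f F -> exists a, In a f /\ In a c.
Proof.
  revert c; induction F as [|f' F IH]; simpl; intros c Hc Hf; [contradiction|].
  apply in_flat_map in Hc as [a [Ha Hc]]; apply in_map_iff in Hc as [c' [<- Hc']].
  destruct Hf as [<-|Hf]; [exists a; simpl; auto|].
  destruct (IH c' Hc' Hf) as [b [Hb Hb']]; exists b; simpl; auto.
Qed.

(* [y] is outside the upward closure of the sets in [F] iff each set of [F]
   has an element outside the upward closure of [y]. *)
Lemma complement_rep_pf (A T : qo) psi G :
  complement_rep A (fun _ => True) T psi G ->
  complement_rep (pfQO A) (fun _ => True) (pfQO T) (map psi) (fun F => map G (selections F)).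
Proof.
  intros [C1 A1 T1]; split.
  - intros F y _ _ Hn.
    destruct (selections_choose F (fun a => forall b, In b y -> ~ qle a b)) as [c [Hc Hq]].
    { intros f Hf; apply NNPP; intro H; apply (Hn f Hf); intros a Ha; apply NNPP; intro H2.
      apply H; exists a; split; auto; intros b Hb Hab; apply H2; eauto. }
    exists (G c); split; [apply in_map; auto|].
    intros pb Hpb; apply in_map_iff in Hpb as [b [<- Hb]].
    apply (C1 c b); auto; intros f Hf Hle; apply (Hq f Hf b Hb Hle).
  - intros F f g _ Hf Hg Hle; apply in_map_iff in Hg as [c [<- Hc]].
    destruct (selections_hit F c f Hc Hf) as [a [Ha Hac]].
    destruct (Hle (psi a) (in_map _ _ _ Ha)) as [g' [Hg' Hl]].
    apply (A1 c a g'); auto.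
  - intros F F' _ Hi g' Hg'; apply in_map_iff in Hg' as [c' [<- Hc']].
    destruct (selections_choose F (fun a => In a c')) as [c [Hc Hq]].
    { intros f Hf; apply (selections_hit F' c' f Hc'); auto. }
    exists (G c); split; [apply in_map; auto|].
    intros x Hx; destruct (T1 c c') with (a := x) as [h [Hh Hl]]; eauto.
Qed.

Section SegmentRep.
Variable W : word.
Hypothesis unbounded : forall x : W, exists y, wlt W x y.
Variable w : W.

Definition seg_min_spec (F : list (seg W w)) (m : W) : Prop :=
  m = w \/ exists x, In x F /\ m = proj1_sig x.

Definition seg_min (F : list (seg W w)) : W :=
  proj1_sig (constructive_indefinite_description _
    (word_least W (seg_min_spec F) (ex_intro _ w (or_introl eq_refl)))).

Lemma seg_min_prop F :
  seg_min_spec F (seg_min F) /\ forall m, seg_min_spec F m -> wle W (seg_min F) m.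
Proof. unfold seg_min; destruct (constructive_indefinite_description _ _) as [m Hm]; exact Hm. Qed.

Lemma complement_rep_seg :
  complement_rep (segQO W w) (fun _ => True) (wordQO W)
    (fun x => succ W unbounded (proj1_sig x)) (fun F => [seg_min F]).
Proof.
  split.
  - intros F y _ _ Hn; exists (seg_min F); split; [simpl; auto|].
    apply succ_least; destruct (proj1 (seg_min_prop F)) as [->|[x [Hx ->]]].
    + exact (proj2_sig y).
    + apply not_wle_wlt, (Hn x Hx).
  - intros F f g _ Hf [<-|[]] Hle.
    apply (wlt_irrefl W (succ W unbounded (proj1_sig f))); eapply wle_wlt_trans; [exact Hle|].
    eapply wle_wlt_trans; [apply (proj2 (seg_min_prop F)); right; eauto|apply succ_gt].
  - intros F F' _ Hi g' [<-|[]]; exists (seg_min F); split; [simpl; auto|].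
    apply (proj2 (seg_min_prop F')).
    destruct (proj1 (seg_min_prop F)) as [->|[x [Hx ->]]]; [left|right; eauto]; auto.
Qed.

End SegmentRep.

Lemma complement_rep_approx (e : expr) : forall X, approx e X ->
  exists psi G, complement_rep X (fun _ => True) (interp e) psi G.
Proof.
  induction e as [W m g|e1 IH1 e2 IH2|e1 IH1 e2 IH2|e1 IH1|e1 IH1|e1 IH1];
    simpl; intros X HX.
  - destruct HX as [w Hw].
    exact (complement_rep_iso _ _ _ _ _ Hw
             (complement_rep_seg W (mult_indec_unbounded W m g) w)).
  - destruct HX as [A [B [HA [HB Hi]]]].
    destruct (IH1 A HA) as [p1 [G1 S1]], (IH2 B HB) as [p2 [G2 S2]].
    exact (complement_rep_iso _ _ _ _ _ Hi (complement_rep_sum _ _ _ _ _ _ _ _ S1 S2)).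
  - destruct HX as [A [B [HA [HB Hi]]]].
    destruct (IH1 A HA) as [p1 [G1 S1]], (IH2 B HB) as [p2 [G2 S2]].
    refine (complement_rep_iso X (prodQO A B) (prodQO (interp e1) (interp e2)) _ _ Hi _).
    apply (complement_rep_restrict _ _ (fun _ => True /\ True)); [tauto|].
    apply (complement_rep_prod _ _ _ _ _ _ _ _ _ _ S1 S2).
  - destruct HX as [A [n [HA Hi]]]; destruct (IH1 A HA) as [p1 [G1 S1]].
    destruct (complement_rep_pow _ _ _ _ S1 n) as [G' S'].
    exact (complement_rep_iso _ _ _ _ _ Hi S').
  - destruct HX as [A [n [HA Hi]]]; destruct (IH1 A HA) as [p1 [G1 S1]].
    destruct (complement_rep_msetn _ _ _ _ S1 n) as [G' S'].
    exact (complement_rep_iso _ _ _ _ _ Hi S').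
  - destruct HX as [A [HA Hi]]; destruct (IH1 A HA) as [p1 [G1 S1]].
    exact (complement_rep_iso _ _ _ _ _ Hi (complement_rep_pf _ _ _ _ S1)).
Qed.

(** * Upper bound: embedding downward closures into approximations *)

Definition below {A : qo} (L : list A) (x : A) : Prop := exists l, In l L /\ qle x l.

(* The downward closure of [L] order-embeds through [phi] into an
   approximation of [e], which moreover contains a bad sequence [c] of length
   [k] avoiding the image; [c] supplies the padding elements needed for
   words, multisets and finite sets. *)
Definition approx_embeds (e : expr) (L : list (interp e)) (k : nat) : Prop :=
  exists (E' : qo) (phi : interp e -> E') (c : list E'),
    approx e E' /\ length c = k /\
    (forall x y, below L x -> below L y -> qle (phi x) (phi y) -> qle x y) /\
    (forall x ci, below L x -> In ci c -> ~ qle (phi x) ci) /\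
    bad c.

Section SegmentEmbedding.
Variable W : word.
Hypothesis unbounded : forall x : W, exists y, wlt W x y.
Variable z0 : W.
Notation sk := (succ_iter W unbounded).

Fixpoint succ_chain (k : nat) : list W :=
  match k with 0 => [] | S i => sk i z0 :: succ_chain i end.

Lemma in_succ_chain k v : In v (succ_chain k) -> exists i, i < k /\ v = sk i z0.
Proof.
  induction k as [|k IH]; simpl; [tauto|]; intros [<-|H]; [exists k; auto|].
  destruct (IH H) as [i [Hi ->]]; exists i; split; auto.
Qed.

Lemma length_succ_chain k : length (succ_chain k) = k.
Proof. induction k; simpl; auto. Qed.

Variable w : W.
Hypothesis z0_lt_w : wlt W z0 w.

Definition clamp (v : W) : seg W w :=
  match excluded_middle_informative (wlt W v w) with
  | left p => exist _ v p
  | right _ => exist _ z0 z0_lt_w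
  end.

Lemma clamp_val v : wlt W v w -> proj1_sig (clamp v) = v.
Proof. intros H; unfold clamp; destruct (excluded_middle_informative _); simpl; tauto. Qed.

End SegmentEmbedding.

Lemma word_upper_bound (W : word) (L : list W) (d : W) :
  exists b, wle W d b /\ forall l, In l L -> wle W l b.
Proof.
  induction L as [|a L [b [Hd Hb]]]; [exists d; split; [apply wle_refl|intros _ []]|].
  destruct (wle_total W a b) as [H|H].
  - exists b; split; auto; intros l [<-|Hl]; auto.
  - exists a; split; [eapply wle_trans; eauto|].
    intros l [<-|Hl]; [apply wle_refl|eapply wle_trans; eauto].
Qed.

(* Below [w := succ (sk k b)], the map [sk k] reflects the order on the
   elements below [b], and the chain [sk (k-1) z0 > ... > z0] stays below
   its image. *)
Lemma seg_embedding (W : word) (unbounded : forall x : W, exists y, wlt W x y)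
    (z0 : W) (z0_least : forall y, wle W z0 y) (L : list W) (k : nat) :
  exists w (phi : W -> seg W w) (c : list (seg W w)), length c = k /\
    (forall x y, @below (wordQO W) L x -> @below (wordQO W) L y ->
       wle W (proj1_sig (phi x)) (proj1_sig (phi y)) -> wle W x y) /\
    (forall x ci, @below (wordQO W) L x -> In ci c ->
       ~ wle W (proj1_sig (phi x)) (proj1_sig ci)) /\
    @bad (segQO W w) c.
Proof.
  set (sk := succ_iter W unbounded).
  destruct (word_upper_bound W L z0) as [b [Hb0 Hb]].
  set (w := succ W unbounded (sk k b)).
  assert (Hsk : forall x, wle W x b -> forall i, i <= k -> wlt W (sk i x) w).
  { intros x Hx i Hi; eapply wle_wlt_trans; [|apply succ_gt].
    eapply wle_trans; [apply succ_iter_mono, Hx|apply succ_iter_le, Hi]. }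
  assert (Hw : wlt W z0 w) by (apply (Hsk z0 Hb0 0); lia).
  assert (Hbelow : forall x, @below (wordQO W) L x -> wle W x b)
    by (intros x [l [Hl Hxl]]; eapply wle_trans; eauto).
  set (cl := clamp W z0 w Hw).
  exists w, (fun x => cl (sk k x)), (map cl (succ_chain W unbounded z0 k)).
  split; [rewrite length_map; apply length_succ_chain|]; split; [|split].
  - intros x y Hx Hy Hle; unfold cl in Hle; rewrite !clamp_val in Hle by (apply Hsk; auto).
    eapply succ_iter_reflect; eauto.
  - intros x ci Hx Hci Hle; apply in_map_iff in Hci as [v [<- Hv]].
    apply in_succ_chain in Hv as [i [Hi ->]]; unfold cl in Hle.
    rewrite !clamp_val in Hle by (apply Hsk; auto; lia).
    apply (wlt_irrefl W (sk i z0)); eapply wle_wlt_trans; [apply succ_iter_mono, z0_least|].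
    eapply wlt_wle_trans; [apply succ_iter_lt, Hi|exact Hle].
  - assert (Hj : forall j, j <= k -> @bad (segQO W w) (map cl (succ_chain W unbounded z0 j)));
      [|apply Hj; auto].
    induction j as [|j IH]; simpl; auto; intros Hj; split; [|apply IH; lia].
    intros y Hy Hle; apply in_map_iff in Hy as [v [<- Hv]].
    apply in_succ_chain in Hv as [i [Hi ->]]; unfold cl in Hle; simpl in Hle.
    rewrite !clamp_val in Hle by (apply Hsk; auto; lia).
    apply (wlt_irrefl W (sk i z0)); eapply wlt_wle_trans; [apply succ_iter_lt, Hi|exact Hle].
Qed.

Lemma approx_embeds_ord (W : word) (m : mult_indec W) (g : ge_omega_omega W) L k :
  approx_embeds (EOrd W m g) L k.
Proof.
  pose proof (mult_indec_unbounded W m g) as unbounded.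
  pose proof g as [gg _].
  destruct (word_least W (fun _ => True)) as [z0 [_ Hz0]]; [exists (gg (exist noninc [] I)); auto|].
  destruct (seg_embedding W unbounded z0 (fun y => Hz0 y I) L k)
    as [w [phi [c [Hl [Hr [Ha Hb]]]]]].
  exists (segQO W w), phi, c; split; [exists w; apply wpo_iso_refl, seg_wqo|auto].
Qed.

Lemma approx_embeds_sum e1 e2 : (forall L k, approx_embeds e1 L k) ->
  (forall L k, approx_embeds e2 L k) -> forall L k, approx_embeds (ESum e1 e2) L k.
Proof.
  intros C1 C2 L k.
  destruct (C1 (lefts L) k) as [A [f1 [c1 [HA [Hl [R1 [N1 B1]]]]]]].
  destruct (C2 (rights L) k) as [B [f2 [c2 [HB [_ [R2 [N2 _]]]]]]].
  destruct (approx_wqo _ _ HA) as [QA _], (approx_wqo _ _ HB) as [QB _].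
  exists (sumQO A B), (fun x => match x with inl a => inl (f1 a) | inr b => inr (f2 b) end),
    (map inl c1).
  split; [exists A, B; split; [|split]; auto; apply wpo_iso_refl, sum_is_qo; auto|].
  split; [rewrite length_map; auto|].
  assert (HLl : forall a, @below (sumQO (interp e1) (interp e2)) L (inl a) -> below (lefts L) a)
    by (intros a [[l|l] [Hl' Hle]]; [exists l; rewrite in_lefts|]; simpl in *; tauto).
  assert (HLr : forall b, @below (sumQO (interp e1) (interp e2)) L (inr b) -> below (rights L) b)
    by (intros b [[l|l] [Hl' Hle]]; [|exists l; rewrite in_rights]; simpl in *; tauto).
  split; [|split].
  - intros [a|a] [b|b] Hx Hy Hle; simpl in *; try contradiction; auto.
  - intros [a|a] ci Hx Hci Hle; apply in_map_iff in Hci as [c [<- Hc]]; simpl in Hle;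
      [apply (N1 a c)|]; auto.
  - apply bad_map; auto.
Qed.

Lemma approx_embeds_prod e1 e2 : (forall L k, approx_embeds e1 L k) ->
  (forall L k, approx_embeds e2 L k) -> forall L k, approx_embeds (EProd e1 e2) L k.
Proof.
  intros C1 C2 L k.
  destruct (C1 (map fst L) k) as [A [f1 [c1 [HA [Hl [R1 [N1 B1]]]]]]].
  destruct (C2 (map snd L) 1) as [B [f2 [[|d [|]] [HB [Hl2 [R2 [N2 _]]]]]]]; try discriminate.
  destruct (approx_wqo _ _ HA) as [QA _], (approx_wqo _ _ HB) as [QB _].
  exists (prodQO A B), (fun x => (f1 (fst x), f2 (snd x))), (map (fun x => (x, d)) c1).
  split; [exists A, B; split; [|split]; auto; apply wpo_iso_refl, prod_is_qo; auto|].
  split; [rewrite length_map; auto|].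
  assert (H1 : forall x, @below (prodQO (interp e1) (interp e2)) L x -> below (map fst L) (fst x))
    by (intros x [l [Hl' [Hle _]]]; exists (fst l); split; auto; apply in_map; auto).
  assert (H2 : forall x, @below (prodQO (interp e1) (interp e2)) L x -> below (map snd L) (snd x))
    by (intros x [l [Hl' [_ Hle]]]; exists (snd l); split; auto; apply in_map; auto).
  split; [|split].
  - intros x y Hx Hy [Ha Hb]; split; auto.
  - intros x ci Hx Hci [Hle _]; apply in_map_iff in Hci as [c [<- Hc]].
    apply (N1 (fst x) c); auto.
  - apply bad_map; auto; intros x y [H _]; auto.
Qed.

Lemma length_le_list_max {A : Type} (L : list (list A)) l :
  In l L -> length l <= list_max (map (@length A) L).
Proof.
  intros Hl; apply (proj1 (Forall_forall _ _) (proj1 (list_max_le _ _) (le_n _))).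
  apply in_map, Hl.
Qed.

Definition pad {A : Type} (n : nat) (m : A) (l : list A) : list A :=
  firstn n (l ++ repeat m n).

Lemma length_pad {A : Type} n (m : A) l : length (pad n m l) = n.
Proof. unfold pad; rewrite length_firstn, length_app, repeat_length; lia. Qed.

Lemma pad_eq {A : Type} n (m : A) l : length l <= n -> pad n m l = l ++ repeat m (n - length l).
Proof.
  intros H; unfold pad; rewrite firstn_app, firstn_all2 by lia; f_equal.
  assert (G : forall k j, k <= j -> firstn k (repeat m j) = repeat m k)
    by (induction k as [|k IH]; intros [|j] Hj; simpl; auto; [lia|f_equal; apply IH; lia]).
  apply G; lia.
Qed.

Section Padding.
Variables (E A : qo) (f : E -> A) (m : A) (D : E -> Prop).
Hypothesis f_reflect : forall x y, D x -> D y -> qle (f x) (f y) -> qle x y.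
Hypothesis m_avoids : forall x, D x -> ~ qle (f x) m.

Lemma padded_listwise_reflect u : forall v k1 k2,
  (forall a, In a u -> D a) -> (forall b, In b v -> D b) ->
  Forall2 qle (map f u ++ repeat m k1) (map f v ++ repeat m k2) -> subword E u v.
Proof.
  induction u as [|a u IH]; intros v k1 k2 Hu Hv H; [constructor|].
  destruct v as [|b v]; simpl in H.
  - destruct k2; simpl in H; inversion H; subst.
    exfalso; eapply m_avoids; [apply Hu; simpl; auto|eassumption].
  - inversion H; subst; constructor.
    + apply f_reflect; [apply Hu|apply Hv|]; simpl; auto.
    + apply (IH v k1 k2); auto; intros; [apply Hu|apply Hv]; simpl; auto.
Qed.

Lemma padded_mset_reflect u v k1 k2 :
  (forall a, In a u -> D a) -> (forall b, In b v -> D b) ->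
  mset_emb A (m :: map f u ++ repeat m k1) (m :: map f v ++ repeat m k2) -> mset_emb E u v.
Proof.
  intros Hu Hv H.
  apply mset_emb_perm_l with (u' := map f u ++ m :: repeat m k1), mset_emb_app_l in H;
    [|apply Permutation_middle].
  apply mset_emb_perm_r with (v' := map f v ++ (m :: repeat m k2)) in H;
    [|apply Permutation_middle].
  apply mset_emb_drop_unreachable, mset_emb_map_reflect in H; auto.
  intros x j Hx Hj; apply in_map_iff in Hx as [a [<- Ha]].
  assert (j = m) as -> by (destruct Hj as [<-|Hj]; auto; apply repeat_spec in Hj; auto).
  apply m_avoids; auto.
Qed.

End Padding.

(* A word [u] of length at most [n] becomes the tuple [m :: pad n m (f u)],
   where [m] comes from the spare bad sequence; the rest of that sequence
   becomes constant tuples. *)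
Lemma approx_embeds_star e1 : (forall L k, approx_embeds e1 L k) ->
  forall L k, approx_embeds (EStar e1) L k.
Proof.
  intros C1 L k.
  destruct (C1 (concat L) (S k)) as [A [f1 [[|m c'] [HA [Hl [R1 [N1 Bc]]]]]]];
    [discriminate|injection Hl as Hl; destruct Bc as [Bm B']].
  set (n := list_max (map (@length _) L)).
  destruct (approx_wqo _ _ HA) as [QA _].
  assert (Lp : forall u, length (m :: pad n m (map f1 u)) = S n)
    by (intro; simpl; rewrite length_pad; auto).
  assert (Lr : forall x : A, length (x :: repeat x n) = S n)
    by (intro; simpl; rewrite repeat_length; auto).
  exists (powQO A (S n)), (fun u => exist (fun l => length l = S n) _ (Lp u)),
    (map (fun x => exist (fun l => length l = S n) _ (Lr x)) c').
  split; [exists A, (S n); split; auto; apply wpo_iso_refl, pow_is_qo; auto|].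
  split; [rewrite length_map; auto|].
  assert (Hin : forall u, @below (starQO (interp e1)) L u ->
                  length u <= n /\ forall a, In a u -> below (concat L) a).
  { intros u [w [Hw Hle]]; split.
    - eapply PeanoNat.Nat.le_trans; [apply subword_length; eauto|apply length_le_list_max; auto].
    - intros a Ha; destruct (subword_in _ _ _ Hle a Ha) as [b [Hb Hab]].
      exists b; split; auto; apply in_concat; eauto. }
  assert (Nm : forall x, below (concat L) x -> ~ qle (f1 x) m) by (intros; apply N1; simpl; auto).
  split; [|split].
  - intros u v Hu Hv Hle; inversion Hle as [|? ? ? ? _ H2]; subst.
    destruct (Hin u Hu) as [Lu Du], (Hin v Hv) as [Lv Dv].
    rewrite !pad_eq in H2 by (rewrite length_map; auto).
    eapply padded_listwise_reflect; eauto.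
  - intros u ci Hu Hci Hle; apply in_map_iff in Hci as [x [<- Hx]].
    inversion Hle; subst; apply (Bm x); auto.
  - apply bad_map; auto; intros x y Hle; inversion Hle; auto.
Qed.

Lemma approx_embeds_mset e1 : (forall L k, approx_embeds e1 L k) ->
  forall L k, approx_embeds (EMset e1) L k.
Proof.
  intros C1 L k.
  destruct (C1 (concat L) (S k)) as [A [f1 [[|m c'] [HA [Hl [R1 [N1 Bc]]]]]]];
    [discriminate|injection Hl as Hl; destruct Bc as [Bm B']].
  set (n := list_max (map (@length _) L)).
  destruct (approx_wqo _ _ HA) as [QA _].
  assert (Lp : forall u, length (m :: pad n m (map f1 u)) = S n)
    by (intro; simpl; rewrite length_pad; auto).
  assert (Lr : forall x : A, length (x :: repeat x n) = S n)
    by (intro; simpl; rewrite repeat_length; auto).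
  assert (Hrep : forall x z : A, In z (x :: repeat x n) -> z = x)
    by (intros x z [<-|Hz]; auto; apply repeat_spec in Hz; auto).
  exists (msetnQO A (S n)), (fun u => exist (fun l => length l = S n) _ (Lp u)),
    (map (fun x => exist (fun l => length l = S n) _ (Lr x)) c').
  split; [exists A, (S n); split; auto; apply wpo_iso_refl, msetn_is_qo; auto|].
  split; [rewrite length_map; auto|].
  assert (Hin : forall u, @below (msetQO (interp e1)) L u ->
                  length u <= n /\ forall a, In a u -> below (concat L) a).
  { intros u [w [Hw Hle]]; split.
    - eapply PeanoNat.Nat.le_trans; [apply mset_emb_length; eauto|apply length_le_list_max; auto].
    - intros a Ha; destruct (mset_emb_in _ _ _ Hle a Ha) as [b [Hb Hab]].
      exists b; split; auto; apply in_concat; eauto. }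
  assert (Nm : forall x, below (concat L) x -> ~ qle (f1 x) m) by (intros; apply N1; simpl; auto).
  split; [|split].
  - intros u v Hu Hv Hle; simpl in Hle.
    destruct (Hin u Hu) as [Lu Du], (Hin v Hv) as [Lv Dv].
    rewrite !pad_eq in Hle by (rewrite length_map; auto).
    eapply padded_mset_reflect; eauto.
  - intros u ci Hu Hci Hle; apply in_map_iff in Hci as [x [<- Hx]]; simpl in Hle.
    destruct (mset_emb_in _ _ _ Hle m (or_introl eq_refl)) as [y [Hy Hmy]].
    rewrite (Hrep x y Hy) in Hmy; apply (Bm x); auto.
  - apply bad_map; auto; intros x y Hle; simpl in Hle.
    destruct (mset_emb_in _ _ _ Hle x (or_introl eq_refl)) as [z [Hz Hxz]].
    rewrite (Hrep y z Hz) in Hxz; auto.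
Qed.

Lemma approx_embeds_pf e1 : (forall L k, approx_embeds e1 L k) ->
  forall L k, approx_embeds (EPf e1) L k.
Proof.
  intros C1 L k.
  destruct (C1 (concat L) (S k)) as [A [f1 [[|m c'] [HA [Hl [R1 [N1 Bc]]]]]]];
    [discriminate|injection Hl as Hl; destruct Bc as [Bm B']].
  destruct (approx_wqo _ _ HA) as [QA _].
  exists (pfQO A), (fun T => m :: map f1 T), (map (fun x => [x]) c').
  split; [exists A; split; auto; apply wpo_iso_refl, hoare_is_qo; auto|].
  split; [rewrite length_map; auto|].
  assert (Hin : forall T, @below (pfQO (interp e1)) L T -> forall a, In a T -> below (concat L) a).
  { intros T [S [HS Hle]] a Ha; destruct (Hle a Ha) as [b [Hb Hab]].
    exists b; split; auto; apply in_concat; eauto. }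
  split; [|split].
  - intros T T' HT HT' Hle a Ha.
    destruct (Hle (f1 a)) as [b [[<-|Hb] Hab]]; [simpl; right; apply in_map; auto| |].
    + exfalso; exact (N1 a m (Hin T HT a Ha) (or_introl eq_refl) Hab).
    + apply in_map_iff in Hb as [a' [<- Ha']]; exists a'; split; auto.
      apply R1; [exact (Hin T HT a Ha)|exact (Hin T' HT' a' Ha')|exact Hab].
  - intros T ci HT Hci Hle; apply in_map_iff in Hci as [x [<- Hx]].
    destruct (Hle m (or_introl eq_refl)) as [y [[<-|[]] Hmy]]; apply (Bm x); auto.
  - apply bad_map; auto; intros x y Hle.
    destruct (Hle x (or_introl eq_refl)) as [z [[<-|[]] Hxz]]; auto.
Qed.

Lemma approx_embeds_all (e : expr) : forall L k, approx_embeds e L k.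
Proof.
  induction e; auto using approx_embeds_ord, approx_embeds_sum, approx_embeds_prod,
    approx_embeds_star, approx_embeds_mset, approx_embeds_pf.
Qed.

(** * Comparing the ranks *)

Lemma sup_child_some_inv (P : qo -> Prop) (F : forall A : qo, list A -> list A -> Prop) y p :
  sup_child P F y (Some p) ->
  exists t', y = Some (existT _ (projT1 p) t') /\ F (projT1 (projT1 p)) t' (projT2 p).
Proof.
  intros H; remember (Some p) as z eqn:Ez; destruct H as [X|X s t Hf]; [discriminate|].
  injection Ez as <-; exists t; split; auto.
Qed.

Lemma sup_child_none_inv (P : qo -> Prop) (F : forall A : qo, list A -> list A -> Prop) y :
  sup_child P F y None -> exists X, y = Some (existT _ X []).
Proof. intros H; remember None as z eqn:Ez; destruct H as [X|]; [eauto|discriminate]. Qed.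

Lemma acc_sup_child (P : qo -> Prop) (F : forall A : qo, list A -> list A -> Prop) X t :
  Acc (F (projT1 X)) t -> Acc (sup_child P F) (Some (existT _ X t)).
Proof.
  induction 1 as [t _ IH]; constructor; intros y Hy.
  apply sup_child_some_inv in Hy as [t' [-> Hf]]; apply IH; auto.
Qed.

Lemma acc_sup_child_approx (e : expr) (X : {E' : qo & approx e E'}) :
  Acc (sup_child (approx e) o_child) (Some (existT _ X [])).
Proof. apply acc_sup_child, almost_full_acc_bad, (approx_wqo e _ (projT2 X)). Qed.

Lemma sdecr_snoc (A : qo) (s : list A) x :
  sdecr s -> (forall y, In y s -> qlt x y) -> sdecr (s ++ [x]).
Proof.
  induction s as [|a s IH]; simpl; intros Hs Hx; [split; auto; intros y []|].
  destruct Hs as [H1 H2]; split; [|apply IH; auto].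
  intros y Hy; apply in_app_or in Hy as [Hy|[<-|[]]]; auto.
Qed.

Lemma sdecr_last2 (A : qo) (pre : list A) a b : sdecr (pre ++ [a; b]) -> qlt b a.
Proof. induction pre as [|c pre IH]; simpl; [intros [H _]; apply H; simpl; auto|tauto]. Qed.

(* A strictly decreasing sequence of finite sets below [S0] yields, through
   an element of each set escaping the next one, a bad sequence in [E]. *)
Section DecreasingToBad.
Variable e : expr.
Let E := interp e.
Variable S0 : list E.
Variable E' : qo.
Variable phi : E -> E'.
Variable HA : approx e E'.
Hypothesis phi_reflect : forall x y, below S0 x -> below S0 y -> qle (phi x) (phi y) -> qle x y.
Let X : {E'' : qo & approx e E''} := existT _ E' HA.

Definition escaping_witnesses (s : list (pfQO E)) (node : sup_node (approx e)) : Prop :=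
  exists Sl xs pre, s = pre ++ [Sl] /\ node = Some (existT _ X (map phi xs)) /\
    bad (map phi xs) /\ (forall a, In a Sl -> below S0 a) /\ (forall x, In x xs -> below S0 x) /\
    (forall x y, In x xs -> In y Sl -> ~ qle x y).

Lemma escaping_witnesses_rank_le : forall node, Acc (sup_child (approx e) o_child) node ->
  forall s, escaping_witnesses s node ->
  rank_le (h_child (pfQO E)) (sup_child (approx e) o_child) s node.
Proof.
  pose proof (qo_trans (interp_is_qo e)) as Etrans.
  intros node Hacc; induction Hacc as [node _ IH].
  intros s [Sl [xs [pre [-> [-> [Hb [HSl [Hxs Hn]]]]]]]].
  constructor; intros s' [[S' ->] Hsd].
  rewrite <- app_assoc in Hsd; apply sdecr_last2 in Hsd as [Hle Hnle].
  assert (Hx : exists x, In x Sl /\ forall y, In y S' -> ~ qle x y).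
  { apply NNPP; intro H; apply Hnle; intros a Ha; apply NNPP; intro H2.
    apply H; exists a; split; auto; intros y Hy Hay; apply H2; eauto. }
  destruct Hx as [x [HxSl HxS']].
  assert (Hbad : bad (map phi (xs ++ [x]))).
  { rewrite map_app; apply bad_snoc; auto; intros a Ha Hle'.
    apply in_map_iff in Ha as [xi [<- Hxi]]; apply (Hn xi x Hxi HxSl), phi_reflect; auto. }
  assert (Hchild : sup_child (approx e) o_child (Some (existT _ X (map phi (xs ++ [x]))))
                     (Some (existT _ X (map phi xs))))
    by (constructor; split; auto; exists (phi x); rewrite map_app; auto).
  exists (Some (existT _ X (map phi (xs ++ [x])))); split; auto.
  apply IH; auto.
  exists S', (xs ++ [x]), (pre ++ [Sl]); split; [rewrite <- app_assoc; auto|].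
  split; auto; split; auto; split; [|split].
  - intros a Ha; destruct (Hle a Ha) as [b [Hb2 Hab]]; destruct (HSl b Hb2) as [l [Hl Hbl]].
    exists l; split; eauto.
  - intros y Hy; apply in_app_or in Hy as [Hy|[<-|[]]]; auto.
  - intros y z Hy Hz Hyz; apply in_app_or in Hy as [Hy|[<-|[]]]; [|apply (HxS' z Hz Hyz)].
    destruct (Hle z Hz) as [w [Hw Hzw]]; apply (Hn y w Hy Hw); eauto.
Qed.

End DecreasingToBad.

(* A bad sequence [t] in an approximation yields the strictly decreasing
   sequence of the complements [G t1] of its prefixes [t1]. *)
Section BadToDecreasing.
Variable e : expr.
Let E := interp e.
Variable X : {E'' : qo & approx e E''}.
Variable psi : projT1 X -> E.
Variable G : list (projT1 X) -> list E.
Hypothesis HG : complement_rep (projT1 X) (fun _ => True) E psi G.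

Definition prefix_complements (node : sup_node (approx e)) (s : list (pfQO E)) : Prop :=
  exists t, node = Some (existT _ X t) /\ bad t /\ sdecr s /\
    (forall S, In S s -> exists t1 t2, t = t1 ++ t2 /\ S = G t1).

Lemma prefix_complement_lt t1 t2 y : bad ((t1 ++ t2) ++ [y]) ->
  @qlt (pfQO E) (G ((t1 ++ t2) ++ [y])) (G t1).
Proof.
  destruct HG as [HC HA HT]; intros Hb; split.
  - apply HT; auto; intros z Hz; rewrite <- app_assoc; apply in_or_app; auto.
  - intros Hle; destruct (HC t1 y) as [g [Hg Hpg]]; auto.
    { intros f Hf; apply (bad_snoc_inv _ _ _ Hb), in_or_app; auto. }
    destruct (Hle g Hg) as [g' [Hg' Hgg']].
    apply (HA ((t1 ++ t2) ++ [y]) y g'); auto.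
    + apply in_or_app; simpl; auto.
    + eapply (qo_trans (interp_is_qo e)); eauto.
Qed.

Lemma prefix_complements_rank_le : forall node, Acc (sup_child (approx e) o_child) node ->
  forall s, prefix_complements node s ->
  rank_le (sup_child (approx e) o_child) (h_child (pfQO E)) node s.
Proof.
  intros node Hacc; induction Hacc as [node _ IH]; intros s [t [-> [Hb [Hsd Hpre]]]].
  constructor; intros node' Hn.
  apply sup_child_some_inv in Hn as [t' [-> [[y ->] Hb']]]; simpl in *.
  assert (Hq : forall S, In S s -> @qlt (pfQO E) (G (t ++ [y])) S)
    by (intros S HSs; destruct (Hpre S HSs) as [t1 [t2 [-> ->]]];
        apply prefix_complement_lt; auto).
  assert (Hsd' : @sdecr (pfQO E) (s ++ [G (t ++ [y])])) by (apply sdecr_snoc; auto).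
  exists (s ++ [G (t ++ [y])]); split; [split; eauto|].
  apply IH; [constructor; split; eauto|].
  exists (t ++ [y]); split; auto; split; auto; split; auto.
  intros S HSs; apply in_app_or in HSs as [HSs|[<-|[]]].
  - destruct (Hpre S HSs) as [t1 [t2 [-> ->]]]; exists t1, (t2 ++ [y]); rewrite app_assoc; auto.
  - exists (t ++ [y]), []; rewrite app_nil_r; auto.
Qed.

End BadToDecreasing.

Lemma h_pf_le_approx_o (e : expr) :
  rank_le (h_child (pfQO (interp e))) (sup_child (approx e) o_child) [] None.
Proof.
  constructor; intros s [[S0 ->] _].
  destruct (approx_embeds_all e S0 0) as [E' [phi [c [HA [_ [Hr _]]]]]].
  exists (Some (existT _ (existT _ E' HA) [])); split; [constructor|].
  apply (escaping_witnesses_rank_le e S0 E' phi HA Hr); [apply acc_sup_child_approx|].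
  exists S0, [], []; repeat split; simpl; try tauto.
  intros a Ha; exists a; split; auto; apply qo_refl, interp_is_qo.
Qed.

Lemma approx_o_le_h_pf (e : expr) :
  rank_le (sup_child (approx e) o_child) (h_child (pfQO (interp e))) None [].
Proof.
  constructor; intros node Hnode; apply sup_child_none_inv in Hnode as [X ->].
  destruct (complement_rep_approx e (projT1 X) (projT2 X)) as [psi [G HG]].
  exists [G []]; split; [split; [exists (G []); auto|simpl; split; auto; intros y []]|].
  apply (prefix_complements_rank_le e X psi G HG); [apply acc_sup_child_approx|].
  exists []; split; [reflexivity|split; [exact I|split]].
  - split; [intros y []|exact I].
  - intros S [<-|[]]; exists [], []; auto.
Qed.

Theorem mainTheorem14 (e : expr) :
  normal_form e ->
  rank_eq (h_child (interp (EPf e))) (sup_child (approx e) o_child)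
          (@nil (interp (EPf e))) None.
Proof. intros _; split; [apply h_pf_le_approx_o|apply approx_o_le_h_pf]. Qed.
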